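(* Let $f:\mathbb{R}^n\to\mathbb{R}$ be $\mathcal{C}^2$ and let $\bar x$ be a nondegenerate critical point of $f$ of Morse index $1$, with $f(\bar x)=c$. Then for every sufficiently small $\theta>0$ there is $\epsilon_0>0$ (depending on $\theta$) such that for every $\epsilon\in(0,\epsilon_0)$: (1) the set $\{x: f(x)\le c-\epsilon\}\cap\mathring{\mathbb{B}}(\bar x,\theta)$ has exactly two path connected components; and (2) there exist points $\tilde x,\tilde y$ lying in distinct path components of this set such that $|\tilde x-\tilde y|$ equals the distance between these two components.
   Context: A critical point $\bar x$ of a $\mathcal{C}^2$ function is nondegenerate if the Hessian $\nabla^2 f(\bar x)$ is invertible; its Morse index is the number of negative eigenvalues of $\nabla^2 f(\bar x)$. $\mathring{\mathbb{B}}(\bar x,\theta)$ denotes the open Euclidean ball of radius $\theta$ about $\bar x$. The distance between two sets $A,B$ is $\inf\{|a-b|: a\in A, b\in B\}$. *)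

From mathcomp Require Import ssreflect ssrfun ssrbool eqtype ssrnat seq fintype bigop.
From Stdlib Require Import Reals.
Open Scope R_scope.

Definition vec (n : nat) := 'I_n -> R.
Definition mat (n : nat) := 'I_n -> 'I_n -> R.

Definition vadd {n} (x y : vec n) : vec n := fun i => x i + y i.
Definition vsub {n} (x y : vec n) : vec n := fun i => x i - y i.
Definition vscale {n} (a : R) (x : vec n) : vec n := fun i => a * x i.
Definition vzero {n} : vec n := fun _ => 0.

Definition dot {n} (x y : vec n) : R := \big[Rplus/0]_(i < n) (x i * y i).
Definition vnorm {n} (x : vec n) : R := sqrt (dot x x).
Definition vdist {n} (x y : vec n) : R := vnorm (vsub x y).

Definition open_ball {n} (xbar : vec n) (theta : R) : vec n -> Prop :=
  fun x => vdist x xbar < theta.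

Definition mvmul {n} (A : mat n) (v : vec n) : vec n :=
  fun i => \big[Rplus/0]_(j < n) (A i j * v j).
Definition mmul {n} (A B : mat n) : mat n :=
  fun i k => \big[Rplus/0]_(j < n) (A i j * B j k).
Definition mid {n} : mat n := fun i j => if i == j then 1 else 0.

Definition invertible {n} (A : mat n) : Prop :=
  exists B : mat n, mmul A B = mid /\ mmul B A = mid.

Definition has_gradient_at {n} (f : vec n -> R) (x g : vec n) : Prop :=
  forall eps, 0 < eps -> exists delta, 0 < delta /\
    forall h : vec n, vnorm h < delta ->
      Rabs (f (vadd x h) - f x - dot g h) <= eps * vnorm h.

Definition has_jacobian_at {n} (F : vec n -> vec n) (x : vec n) (J : mat n) : Prop :=
  forall eps, 0 < eps -> exists delta, 0 < delta /\
    forall h : vec n, vnorm h < delta ->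
      vnorm (vsub (vsub (F (vadd x h)) (F x)) (mvmul J h)) <= eps * vnorm h.

Definition mat_continuous {n} (H : vec n -> mat n) : Prop :=
  forall x eps, 0 < eps -> exists delta, 0 < delta /\
    forall y, vdist y x < delta -> forall i j, Rabs (H y i j - H x i j) < eps.

Definition C2_with {n} (f : vec n -> R) (grad : vec n -> vec n)
    (hess : vec n -> mat n) : Prop :=
  (forall x, has_gradient_at f x (grad x)) /\
  (forall x, has_jacobian_at grad x (hess x)) /\
  mat_continuous hess.

Definition lin_indep {n k} (vs : 'I_k -> vec n) : Prop :=
  forall c : 'I_k -> R,
    (forall j, \big[Rplus/0]_(i < k) (c i * vs i j) = 0) -> forall i, c i = 0.

Definition neg_eig_count_ge {n} (A : mat n) (k : nat) : Prop :=
  exists vs : 'I_k -> vec n, lin_indep vs /\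
    forall i, exists lam, lam < 0 /\ mvmul A (vs i) = vscale lam (vs i).

(* Number of negative eigenvalues counted with multiplicity
   (for symmetric A, geometric = algebraic multiplicity). *)
Definition morse_index {n} (A : mat n) (k : nat) : Prop :=
  neg_eig_count_ge A k /\ ~ neg_eig_count_ge A k.+1.

Definition path_in {n} (S : vec n -> Prop) (x y : vec n) : Prop :=
  exists gamma : R -> vec n,
    gamma 0 = x /\ gamma 1 = y /\
    (forall t, 0 <= t <= 1 -> S (gamma t)) /\
    (forall t, 0 <= t <= 1 -> forall eps, 0 < eps -> exists delta, 0 < delta /\
       forall s, 0 <= s <= 1 -> Rabs (s - t) < delta -> vdist (gamma s) (gamma t) < eps).

Definition path_component {n} (S : vec n -> Prop) (x : vec n) : vec n -> Prop :=
  fun y => S x /\ path_in S x y.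

Definition exactly_two_path_components {n} (S : vec n -> Prop) : Prop :=
  exists a b, S a /\ S b /\ ~ path_in S a b /\
    forall x, S x -> path_in S a x \/ path_in S b x.

Definition set_distance {n} (A B : vec n -> Prop) (d : R) : Prop :=
  (forall a b, A a -> B b -> d <= vdist a b) /\
  (forall d', (forall a b, A a -> B b -> d' <= vdist a b) -> d' <= d).

(* Write points near [xbar] as [xbar + s u + w], with [u] a unit eigenvector of the
   Hessian for its negative eigenvalue and [w] orthogonal to [u].  The Hessian is
   symmetric, and the Morse index together with invertibility makes it coercive on
   the orthogonal of [u]; on a small ball it stays close to its value at [xbar].
   Hence [f >= c] on the hyperplane [s = 0], [f] is concave in [s] and convex in
   [w], and below level [c] one has [|w| <= K |s|].  The sublevel set thus misses the
   hyperplane, so by the intermediate value theorem no path joins its two sides,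
   while every point of a side is joined to the axis point [xbar +- s1 u] by
   segments along [u] and along [w].  For the closest points: a pair on opposite
   sides at distance below [2 s1] lies in the cone inside the ball of radius
   [theta / 2], a compact set on which the distance attains its minimum, and the
   axis pair at distance [2 s1] bounds every other pair. *)

From mathcomp Require Import ssreflect ssrfun ssrbool eqtype ssrnat seq fintype bigop.
From mathcomp Require Import Rstruct.
From mathcomp Require order ssralg ssrnum matrix boolp classical_sets.
From mathcomp Require topology normedtype derive Rstruct_topology.
From Stdlib Require Import Reals Lra Psatz FunctionalExtensionality Classical.
Open Scope R_scope.
Set Implicit Arguments. Unset Strict Implicit.

(** * Euclidean vectors and matrices *)

Lemma sumR_add n (F G : 'I_n -> R) :
  \big[Rplus/0]_(i < n) (F i + G i) = \big[Rplus/0]_(i < n) F i + \big[Rplus/0]_(i < n) G i.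
Proof. by rewrite big_split. Qed.

Lemma sumR_scal n a (F : 'I_n -> R) :
  \big[Rplus/0]_(i < n) (a * F i) = a * \big[Rplus/0]_(i < n) F i.
Proof. by rewrite big_distrr. Qed.

Lemma sumR_ext n (F G : 'I_n -> R) : (forall i, F i = G i) ->
  \big[Rplus/0]_(i < n) F i = \big[Rplus/0]_(i < n) G i.
Proof. by move=> H; apply: eq_bigr => i _; exact: H. Qed.

Lemma sumR_le n (F G : 'I_n -> R) : (forall i, F i <= G i) ->
  \big[Rplus/0]_(i < n) F i <= \big[Rplus/0]_(i < n) G i.
Proof.
move=> H; apply: (big_ind2 (fun a b => a <= b)); [lra | move=> *; lra | move=> i _; exact: H].
Qed.

Lemma sumR_ge0 n (F : 'I_n -> R) : (forall i, 0 <= F i) -> 0 <= \big[Rplus/0]_(i < n) F i.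
Proof. move=> H; apply: (big_ind (fun a => 0 <= a)); [lra | move=> *; lra | move=> i _; exact: H]. Qed.

Lemma Rabs_sumR_le n (F : 'I_n -> R) :
  Rabs (\big[Rplus/0]_(i < n) F i) <= \big[Rplus/0]_(i < n) Rabs (F i).
Proof.
apply: (big_ind2 (fun a b => Rabs a <= b)); first by rewrite Rabs_R0; lra.
  move=> a b c d H1 H2; apply: Rle_trans (Rabs_triang _ _) _; lra.
by move=> i _; lra.
Qed.

Lemma sumR_ge_term n (F : 'I_n -> R) i : (forall j, 0 <= F j) -> F i <= \big[Rplus/0]_(j < n) F j.
Proof.
move=> H.
have -> : \big[Rplus/0]_(j < n) F j = F i + \big[Rplus/0]_(j < n | j != i) F j by rewrite (bigD1 i).
suff : 0 <= \big[Rplus/0]_(j < n | j != i) F j by lra.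
apply: (big_ind (fun a => 0 <= a)); [lra | move=> *; lra | move=> j _; exact: H].
Qed.

Lemma sumR_const1 n : \big[Rplus/0]_(i < n) (1:R) = INR n.
Proof.
rewrite big_const_ord; elim: n => [|n IH] //=.
rewrite IH; case: n {IH} => [|n] /=; ring.
Qed.

Lemma vext n (x y : vec n) : (forall i, x i = y i) -> x = y.
Proof. move=> H; apply: functional_extensionality; exact: H. Qed.

Lemma dot_comm n (x y : vec n) : dot x y = dot y x.
Proof. by apply: sumR_ext => i; ring. Qed.

Lemma dot_addl n (x y z : vec n) : dot (vadd x y) z = dot x z + dot y z.
Proof. rewrite /dot -sumR_add; apply: sumR_ext => i; rewrite /vadd; ring. Qed.

Lemma dot_addr n (x y z : vec n) : dot z (vadd x y) = dot z x + dot z y.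
Proof. by rewrite dot_comm dot_addl !(dot_comm z). Qed.

Lemma dot_scalel n a (x y : vec n) : dot (vscale a x) y = a * dot x y.
Proof. rewrite /dot -sumR_scal; apply: sumR_ext => i; rewrite /vscale; ring. Qed.

Lemma dot_scaler n a (x y : vec n) : dot y (vscale a x) = a * dot y x.
Proof. by rewrite dot_comm dot_scalel dot_comm. Qed.

Lemma dot_subl n (x y z : vec n) : dot (vsub x y) z = dot x z - dot y z.
Proof.
have -> : vsub x y = vadd x (vscale (-1) y) by apply: vext => i; rewrite /vsub /vadd /vscale; ring.
rewrite dot_addl dot_scalel; ring.
Qed.

Lemma dot_subr n (x y z : vec n) : dot z (vsub x y) = dot z x - dot z y.
Proof. by rewrite dot_comm dot_subl !(dot_comm z). Qed.

Lemma dot_zerol n (x : vec n) : dot vzero x = 0.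
Proof. rewrite /dot big1 // => i _; rewrite /vzero; ring. Qed.

Lemma dot_ge0 n (x : vec n) : 0 <= dot x x.
Proof. apply: sumR_ge0 => i; nra. Qed.

Lemma sqr_coord_le_dot n (x : vec n) i : x i * x i <= dot x x.
Proof. rewrite /dot; apply: (@sumR_ge_term n (fun j => x j * x j) i) => j; nra. Qed.

Lemma dot_eq0 n (x : vec n) : dot x x = 0 -> x = vzero.
Proof.
move=> H; apply: vext => i; rewrite /vzero.
have := sqr_coord_le_dot x i; nra.
Qed.

Lemma dot_cauchy_schwarz n (x y : vec n) : dot x y * dot x y <= dot x x * dot y y.
Proof.
have H : forall t, 0 <= dot x x - 2 * t * dot x y + t * t * dot y y.
  move=> t; have := dot_ge0 (vsub x (vscale t y)).
  rewrite !dot_subl !dot_subr !dot_scalel !dot_scaler (dot_comm y x); lra.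
have Hx := dot_ge0 x; have Hy := dot_ge0 y.
case: (Req_dec (dot y y) 0) => Hy0.
  suff -> : dot x y = 0 by rewrite Hy0; lra.
  case: (Req_dec (dot x y) 0) => // Hn.
  have := H ((dot x x + 1) / (2 * dot x y)); rewrite Hy0.
  have -> : 2 * ((dot x x + 1) / (2 * dot x y)) * dot x y = dot x x + 1 by field.
  lra.
have := H (dot x y / dot y y).
have -> : dot x x - 2 * (dot x y / dot y y) * dot x y + dot x y / dot y y * (dot x y / dot y y) * dot y y
  = (dot x x * dot y y - dot x y * dot x y) / dot y y by field.
move=> h; have Hyp : 0 < dot y y by lra.
have := Rmult_le_compat_l (dot y y) _ _ (Rlt_le _ _ Hyp) h.
have -> : dot y y * ((dot x x * dot y y - dot x y * dot x y) / dot y y)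
  = dot x x * dot y y - dot x y * dot x y by field; lra.
lra.
Qed.

Lemma vnorm_ge0 n (x : vec n) : 0 <= vnorm x.
Proof. exact: sqrt_pos. Qed.

Lemma vnorm_sq n (x : vec n) : vnorm x * vnorm x = dot x x.
Proof. rewrite /vnorm sqrt_sqrt //; exact: dot_ge0. Qed.

Lemma vnorm_unit n (u : vec n) : dot u u = 1 -> vnorm u = 1.
Proof. by move=> h; rewrite /vnorm h sqrt_1. Qed.

Lemma Rabs_dot_le n (x y : vec n) : Rabs (dot x y) <= vnorm x * vnorm y.
Proof.
apply: Rsqr_incr_0_var; last by apply: Rmult_le_pos; apply: vnorm_ge0.
rewrite /Rsqr -Rabs_mult Rabs_right; last by apply: Rle_ge; nra.
have -> : vnorm x * vnorm y * (vnorm x * vnorm y) = (vnorm x * vnorm x) * (vnorm y * vnorm y) by ring.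
rewrite !vnorm_sq; exact: dot_cauchy_schwarz.
Qed.

Lemma vnorm_lt n (x : vec n) b : 0 < b -> (vnorm x < b <-> dot x x < b * b).
Proof.
move=> hb; have hx := dot_ge0 x; split => h.
  have := sqrt_pos (dot x x); have := sqrt_sqrt _ hx; rewrite /vnorm in h; nra.
rewrite /vnorm -(sqrt_square b); last lra.
apply: sqrt_lt_1_alt; lra.
Qed.

Lemma vnorm_le n (x : vec n) b : 0 <= b -> (vnorm x <= b <-> dot x x <= b * b).
Proof.
move=> hb; split => h.
  rewrite -vnorm_sq; have := vnorm_ge0 x; nra.
rewrite -(sqrt_square b) //; exact: sqrt_le_1_alt.
Qed.

Lemma vnorm_scale n a (x : vec n) : vnorm (vscale a x) = Rabs a * vnorm x.
Proof.
rewrite /vnorm dot_scalel dot_scaler.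
have -> : a * (a * dot x x) = (a * a) * dot x x by ring.
rewrite sqrt_mult_alt; last nra.
by rewrite -Rsqr_def sqrt_Rsqr_abs.
Qed.

Lemma vnorm_triang n (x y : vec n) : vnorm (vadd x y) <= vnorm x + vnorm y.
Proof.
apply/vnorm_le; first by have := vnorm_ge0 x; have := vnorm_ge0 y; lra.
rewrite !dot_addl !dot_addr (dot_comm y x).
have := Rabs_dot_le x y; have := vnorm_sq x; have := vnorm_sq y.
have := Rle_abs (dot x y); nra.
Qed.

Lemma Rabs_coord_le_vnorm n (x : vec n) i : Rabs (x i) <= vnorm x.
Proof.
apply: Rsqr_incr_0_var; last exact: vnorm_ge0.
rewrite /Rsqr vnorm_sq -Rabs_mult Rabs_right; first exact: sqr_coord_le_dot.
apply: Rle_ge; nra.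
Qed.

Lemma vnorm_le_coord_bound n (v : vec n) d : 0 <= d ->
  (forall i, Rabs (v i) <= d) -> vnorm v <= sqrt (INR n) * d.
Proof.
move=> hd H; apply/vnorm_le; first by apply: Rmult_le_pos => //; exact: sqrt_pos.
have -> : sqrt (INR n) * d * (sqrt (INR n) * d) = (sqrt (INR n) * sqrt (INR n)) * (d * d) by ring.
rewrite sqrt_sqrt; last exact: pos_INR.
apply: (@Rle_trans _ (\big[Rplus/0]_(i < n) (d * d * 1))).
  apply: sumR_le => i; have := H i; rewrite /Rabs; case: Rcase_abs => ? ?; nra.
rewrite sumR_scal sumR_const1; lra.
Qed.

Lemma vdist_self n (x : vec n) : vdist x x = 0.
Proof.
rewrite /vdist /vnorm -sqrt_0; congr sqrt.
rewrite /dot big1 // => i _; rewrite /vsub; ring.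
Qed.

Lemma sum_abs_le_vnorm n (d : vec n) : \big[Rplus/0]_(j < n) Rabs (d j) <= sqrt (INR n) * vnorm d.
Proof.
pose absd : vec n := fun j => Rabs (d j).
have -> : \big[Rplus/0]_(j < n) Rabs (d j) = dot absd (fun _ => 1).
  by rewrite /dot; apply: sumR_ext => j; rewrite /absd; ring.
apply: Rle_trans (Rle_abs _) _; apply: Rle_trans (Rabs_dot_le _ _) _.
have -> : vnorm absd = vnorm d.
  rewrite /vnorm; congr sqrt; apply: sumR_ext => j.
  by rewrite /absd -Rabs_mult Rabs_right //; apply: Rle_ge; nra.
have -> : vnorm (fun _ : 'I_n => 1) = sqrt (INR n).
  by rewrite /vnorm -sumR_const1; congr sqrt; apply: sumR_ext => j; ring.
rewrite Rmult_comm; lra.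
Qed.

Lemma mvmul_add n (A : mat n) x y : mvmul A (vadd x y) = vadd (mvmul A x) (mvmul A y).
Proof. apply: vext => i; rewrite /mvmul /vadd -sumR_add; apply: sumR_ext => j; ring. Qed.

Lemma mvmul_scale n (A : mat n) a x : mvmul A (vscale a x) = vscale a (mvmul A x).
Proof. apply: vext => i; rewrite /mvmul /vscale -sumR_scal; apply: sumR_ext => j; ring. Qed.

Lemma mvmul_zero n (A : mat n) : mvmul A vzero = vzero.
Proof. apply: vext => i; rewrite /mvmul /vzero big1 // => j _; ring. Qed.

Lemma mvmul_mmul n (A B : mat n) x : mvmul (mmul A B) x = mvmul A (mvmul B x).
Proof.
apply: vext => i; rewrite /mvmul /mmul.
have -> : \big[Rplus/0]_(j < n) (\big[Rplus/0]_(k < n) (A i k * B k j) * x j)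
  = \big[Rplus/0]_(j < n) \big[Rplus/0]_(k < n) (A i k * B k j * x j).
  apply: sumR_ext => j; rewrite Rmult_comm -sumR_scal; apply: sumR_ext => k; ring.
rewrite exchange_big; apply: sumR_ext => k.
rewrite -sumR_scal; apply: sumR_ext => j; ring.
Qed.

Lemma mvmul_mid n (x : vec n) : mvmul mid x = x.
Proof.
apply: vext => i; rewrite /mvmul /mid (bigD1 i) //= eqxx big1 /=; first ring.
by move=> j /negbTE; rewrite eq_sym => ->; ring.
Qed.

Lemma invertible_ker n (A : mat n) x : invertible A -> mvmul A x = vzero -> x = vzero.
Proof.
move=> [B [_ HBA]] Hx.
by rewrite -(mvmul_mid x) -HBA mvmul_mmul Hx mvmul_zero.
Qed.

Lemma Rabs_dot_mvmul_le n (A : mat n) eta d e : (forall i j, Rabs (A i j) <= eta) ->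
  Rabs (dot (mvmul A d) e) <= eta * INR n * vnorm d * vnorm e.
Proof.
move=> HA.
case: n A HA d e => [|n] A HA d e.
  by rewrite /dot big_ord0 Rabs_R0 /=; lra.
have eta0 : 0 <= eta by have := HA ord0 ord0; have := Rabs_pos (A ord0 ord0); lra.
have -> : dot (mvmul A d) e = \big[Rplus/0]_(i < n.+1) \big[Rplus/0]_(j < n.+1) (A i j * d j * e i).
  rewrite /dot /mvmul; apply: sumR_ext => i.
  rewrite Rmult_comm -sumR_scal; apply: sumR_ext => j; ring.
apply: Rle_trans (Rabs_sumR_le _) _.
apply: (@Rle_trans _ (\big[Rplus/0]_(i < n.+1) \big[Rplus/0]_(j < n.+1) (eta * Rabs (d j) * Rabs (e i)))).
  apply: sumR_le => i; apply: Rle_trans (Rabs_sumR_le _) _; apply: sumR_le => j.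
  rewrite !Rabs_mult; have := HA i j; have := Rabs_pos (d j); have := Rabs_pos (e i).
  move=> *; apply: Rmult_le_compat_r => //; exact: Rmult_le_compat_r.
have -> : \big[Rplus/0]_(i < n.+1) \big[Rplus/0]_(j < n.+1) (eta * Rabs (d j) * Rabs (e i))
  = eta * (\big[Rplus/0]_(j < n.+1) Rabs (d j)) * (\big[Rplus/0]_(i < n.+1) Rabs (e i)).
  rewrite -sumR_scal; apply: sumR_ext => i.
  rewrite Rmult_comm -sumR_scal -sumR_scal; apply: sumR_ext => j; ring.
have h1 := sum_abs_le_vnorm d; have h2 := sum_abs_le_vnorm e.
have s1 := sumR_ge0 (fun j => Rabs_pos (d j)).
have s2 := sumR_ge0 (fun j => Rabs_pos (e j)).
have hn : sqrt (INR n.+1) * sqrt (INR n.+1) = INR n.+1 by apply: sqrt_sqrt; apply: pos_INR.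
have := sqrt_pos (INR n.+1); have := vnorm_ge0 d; have := vnorm_ge0 e; move=> *.
apply: (@Rle_trans _ (eta * (sqrt (INR n.+1) * vnorm d) * (sqrt (INR n.+1) * vnorm e))).
  apply: Rmult_le_compat; nra.
right; transitivity (eta * (sqrt (INR n.+1) * sqrt (INR n.+1)) * vnorm d * vnorm e); first ring.
by rewrite hn.
Qed.

Lemma Rabs_dot_mvmul_sub_le n (A B : mat n) eta d e :
  (forall i j, Rabs (A i j - B i j) <= eta) ->
  Rabs (dot (mvmul A d) e - dot (mvmul B d) e) <= eta * INR n * vnorm d * vnorm e.
Proof.
move=> H; have := Rabs_dot_mvmul_le d e H.
have -> : dot (mvmul (fun i j => A i j - B i j) d) e = dot (mvmul A d) e - dot (mvmul B d) e.
  rewrite -dot_subl; congr dot; apply: vext => i; rewrite /mvmul /vsub.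
  have -> : \big[Rplus/0]_(j < n) ((A i j - B i j) * d j)
    = \big[Rplus/0]_(j < n) (A i j * d j + (-1) * (B i j * d j)) by apply: sumR_ext => j; ring.
  rewrite sumR_add sumR_scal; ring.
done.
Qed.

Lemma Rabs_le_between x a : Rabs x <= a -> - a <= x <= a.
Proof. by move=> h; have := Rle_abs x; have := Rle_abs (- x); rewrite Rabs_Ropp; lra. Qed.

Lemma lt_of_sqr_lt a b : 0 < b -> a * a < b * b -> a < b.
Proof.
move=> hb h; apply: Rnot_le_lt => h'.
by have := Rmult_le_compat _ _ _ _ (Rlt_le _ _ hb) (Rlt_le _ _ hb) h' h'; lra.
Qed.

Lemma dot_scale_le n t (w : vec n) : 0 <= t <= 1 -> dot (vscale t w) (vscale t w) <= dot w w.
Proof.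
move=> ht; rewrite dot_scalel dot_scaler.
have := dot_ge0 w; have : t * t <= 1 by nra.
nra.
Qed.

(** * Calculus along lines *)

Lemma derivable_pt_lim_of_remainder (phi : R -> R) t l :
  (forall e, 0 < e -> exists del, 0 < del /\ forall h, Rabs h < del ->
     Rabs (phi (t + h) - phi t - h * l) <= e * Rabs h) -> derivable_pt_lim phi t l.
Proof.
move=> H eps Heps.
have [del [Hdel Hh]] := H (eps / 2) ltac:(lra).
exists (mkposreal del Hdel) => h hn hl /=.
have hp : 0 < Rabs h by apply: Rabs_pos_lt.
have -> : (phi (t + h) - phi t) / h - l = (phi (t + h) - phi t - h * l) / h by field.
rewrite /Rdiv Rabs_mult Rabs_inv.
apply: (Rmult_lt_reg_r (Rabs h)) => //.
rewrite Rmult_assoc Rinv_l; last lra.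
have := Hh h hl; nra.
Qed.

Lemma derivable_pt_lim_quadratic p q r a x :
  derivable_pt_lim (fun y => p + q * (y - a) + r * ((y - a) * (y - a))) x (q + 2 * r * (x - a)).
Proof.
apply: derivable_pt_lim_of_remainder => e he.
have hr := Rabs_pos r.
exists (e / (Rabs r + 1)); split; first by apply: Rdiv_lt_0_compat; lra.
move=> h hh.
have -> : p + q * (x + h - a) + r * ((x + h - a) * (x + h - a))
    - (p + q * (x - a) + r * ((x - a) * (x - a))) - h * (q + 2 * r * (x - a)) = r * h * h by ring.
rewrite !Rabs_mult.
have : Rabs h * (Rabs r + 1) < e.
  have := Rmult_lt_compat_r (Rabs r + 1) _ _ ltac:(lra) hh.
  rewrite /Rdiv Rmult_assoc Rinv_l; lra.
have := Rabs_pos h; nra.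
Qed.

Lemma nondecreasing_of_deriv_ge0 (phi phi1 : R -> R) a b :
  a <= b -> (forall x, a <= x <= b -> derivable_pt_lim phi x (phi1 x)) ->
  (forall x, a <= x <= b -> 0 <= phi1 x) -> phi a <= phi b.
Proof.
move=> hab hd hp.
case: (Rle_lt_or_eq_dec _ _ hab) => [hlt|->]; last lra.
have [c [hc hc']] := MVT_cor2 phi phi1 _ _ hlt hd.
have := hp c ltac:(lra); nra.
Qed.

Lemma Rabs_increment_le (phi phi1 : R -> R) a b K :
  a <= b -> (forall x, a <= x <= b -> derivable_pt_lim phi x (phi1 x)) ->
  (forall x, a <= x <= b -> Rabs (phi1 x) <= K) -> Rabs (phi b - phi a) <= K * (b - a).
Proof.
move=> hab hd hp.
case: (Rle_lt_or_eq_dec _ _ hab) => [hlt|->].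
  have [c [hc hc']] := MVT_cor2 phi phi1 _ _ hlt hd.
  rewrite hc Rabs_mult (Rabs_right (b - a)); last lra.
  apply: Rmult_le_compat_r; [lra | apply: hp; lra].
rewrite Rminus_diag Rabs_R0; have := hp b ltac:(lra); have := Rabs_pos (phi1 b); nra.
Qed.

Lemma taylor_lower (psi psi1 psi2 : R -> R) a b m :
  a <= b ->
  (forall x, a <= x <= b -> derivable_pt_lim psi x (psi1 x)) ->
  (forall x, a <= x <= b -> derivable_pt_lim psi1 x (psi2 x)) ->
  (forall x, a <= x <= b -> m <= psi2 x) ->
  psi a + psi1 a * (b - a) + m / 2 * ((b - a) * (b - a)) <= psi b.
Proof.
move=> hab h1 h2 hm.
pose chi1 x := psi1 x - (psi1 a + m * (x - a) + 0 * ((x - a) * (x - a))).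
pose chi x := psi x - (psi a + psi1 a * (x - a) + m / 2 * ((x - a) * (x - a))).
have dchi1 x : a <= x <= b -> derivable_pt_lim chi1 x (psi2 x - (m + 2 * 0 * (x - a))).
  move=> hx; apply: (derivable_pt_lim_minus psi1); [exact: h2 | exact: derivable_pt_lim_quadratic].
have dchi x : a <= x <= b -> derivable_pt_lim chi x (chi1 x).
  move=> hx.
  have -> : chi1 x = psi1 x - (psi1 a + 2 * (m / 2) * (x - a)) by rewrite /chi1; field.
  apply: (derivable_pt_lim_minus psi); [exact: h1 | exact: derivable_pt_lim_quadratic].
have chi1_ge0 x : a <= x <= b -> 0 <= chi1 x.
  move=> hx; have -> : 0 = chi1 a by rewrite /chi1; ring.
  apply: (nondecreasing_of_deriv_ge0 (phi1 := fun y => psi2 y - (m + 2 * 0 * (y - a)))); first lra.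
    move=> y hy; apply: dchi1; lra.
  move=> y hy; have := hm y ltac:(lra); lra.
have : chi a <= chi b by apply: (nondecreasing_of_deriv_ge0 (phi1 := chi1)).
rewrite /chi; lra.
Qed.

Lemma taylor_upper (psi psi1 psi2 : R -> R) a b M :
  a <= b ->
  (forall x, a <= x <= b -> derivable_pt_lim psi x (psi1 x)) ->
  (forall x, a <= x <= b -> derivable_pt_lim psi1 x (psi2 x)) ->
  (forall x, a <= x <= b -> psi2 x <= M) ->
  psi b <= psi a + psi1 a * (b - a) + M / 2 * ((b - a) * (b - a)).
Proof.
move=> hab h1 h2 hm.
have := taylor_lower (psi := fun x => - psi x) (psi1 := fun x => - psi1 x)
  (psi2 := fun x => - psi2 x) (m := - M) hab.
have -> : - M / 2 = - (M / 2) by field.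
move=> H; suff : - psi a + - psi1 a * (b - a) + - (M / 2) * ((b - a) * (b - a)) <= - psi b by lra.
apply: H.
- move=> x hx; exact: derivable_pt_lim_opp (h1 x hx).
- move=> x hx; exact: derivable_pt_lim_opp (h2 x hx).
- move=> x hx; have := hm x hx; lra.
Qed.

(* An interior point exceeding both endpoint values would force [psi1] to go from
   positive to negative, hence [psi2 < 0] somewhere. *)
Lemma le_Rmax_of_convex (psi psi1 psi2 : R -> R) a b t :
  a <= t <= b ->
  (forall x, a <= x <= b -> derivable_pt_lim psi x (psi1 x)) ->
  (forall x, a <= x <= b -> derivable_pt_lim psi1 x (psi2 x)) ->
  (forall x, a <= x <= b -> 0 <= psi2 x) ->
  psi t <= Rmax (psi a) (psi b).
Proof.
move=> ht h1 h2 hp.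
apply: Rnot_lt_le => hc.
have ha : psi a < psi t by apply: Rle_lt_trans (Rmax_l _ _) hc.
have hb : psi b < psi t by apply: Rle_lt_trans (Rmax_r _ _) hc.
have hat : a < t by case: (Req_dec a t) => [e|?]; [subst; lra | lra].
have htb : t < b by case: (Req_dec t b) => [e|?]; [subst; lra | lra].
have [c1 [e1 hc1]] := MVT_cor2 psi psi1 _ _ hat ltac:(move=> x hx; apply: h1; lra).
have [c2 [e2 hc2]] := MVT_cor2 psi psi1 _ _ htb ltac:(move=> x hx; apply: h1; lra).
have p1 : 0 < psi1 c1 by apply: (Rmult_lt_reg_r (t - a)); lra.
have p2 : psi1 c2 < 0 by apply: (Rmult_lt_reg_r (b - t)); lra.
have [c3 [e3 hc3]] := MVT_cor2 psi1 psi2 c1 c2 ltac:(lra) ltac:(move=> x hx; apply: h2; lra).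
have := hp c3 ltac:(lra); nra.
Qed.

Definition line {n} (x d : vec n) (t : R) : vec n := vadd x (vscale t d).

Lemma line0 n (x d : vec n) : line x d 0 = x.
Proof. apply: vext => i; rewrite /line /vadd /vscale; ring. Qed.

Lemma line_shift n (x d : vec n) t h : vadd (line x d t) (vscale h d) = line x d (t + h).
Proof. apply: vext => i; rewrite /line /vadd /vscale; ring. Qed.

Lemma line_comm n (x a b : vec n) s t : line (line x a s) b t = line (line x b t) a s.
Proof. apply: vext => i; rewrite /line /vadd /vscale; ring. Qed.

Lemma vsub_line n (x d : vec n) t : vsub (line x d t) x = vscale t d.
Proof. apply: vext => i; rewrite /line /vadd /vscale /vsub; ring. Qed.

Lemma vdist_line n (x d : vec n) t : vdist (line x d t) x = Rabs t * vnorm d.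
Proof. by rewrite /vdist vsub_line vnorm_scale. Qed.

Lemma vdist_line_line_le n (x a b : vec n) s t :
  vdist (line (line x a s) b t) x <= Rabs s * vnorm a + Rabs t * vnorm b.
Proof.
rewrite /vdist; have -> : vsub (line (line x a s) b t) x = vadd (vscale s a) (vscale t b).
  by apply: vext => i; rewrite /line /vadd /vscale /vsub; ring.
by rewrite -!vnorm_scale; apply: vnorm_triang.
Qed.

Section DerivativesAlongLines.
Variables (n : nat) (f : vec n -> R) (grad : vec n -> vec n) (hess : vec n -> mat n).

Lemma derivable_along_line x d t :
  (forall y, has_gradient_at f y (grad y)) ->
  derivable_pt_lim (fun s => f (line x d s)) t (dot (grad (line x d t)) d).
Proof.
move=> Hg; apply: derivable_pt_lim_of_remainder => e he.
have hd := vnorm_ge0 d.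
have [del [hdel Hdel]] := Hg (line x d t) (e / (vnorm d + 1)) ltac:(apply: Rdiv_lt_0_compat; lra).
exists (del / (vnorm d + 1)); split; first by apply: Rdiv_lt_0_compat; lra.
move=> h hh.
have hh' : Rabs h * (vnorm d + 1) < del.
  have := Rmult_lt_compat_r (vnorm d + 1) _ _ ltac:(lra) hh.
  rewrite /Rdiv Rmult_assoc Rinv_l; lra.
have hv : vnorm (vscale h d) < del by rewrite vnorm_scale; have := Rabs_pos h; nra.
have := Hdel _ hv; rewrite line_shift dot_scaler vnorm_scale => H.
apply: (Rle_trans _ _ _ H).
have : e / (vnorm d + 1) * vnorm d <= e.
  apply: (Rmult_le_reg_r (vnorm d + 1)); first lra.
  rewrite /Rdiv; field_simplify; [nra | lra].
have := Rabs_pos h; nra.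
Qed.

Lemma derivable_grad_along_line x d a t :
  (forall y, has_jacobian_at grad y (hess y)) ->
  derivable_pt_lim (fun s => dot (grad (line x d s)) a) t (dot (mvmul (hess (line x d t)) d) a).
Proof.
move=> Hg; apply: derivable_pt_lim_of_remainder => e he.
have hd := vnorm_ge0 d; have ha := vnorm_ge0 a.
set K := (vnorm d + 1) * (vnorm a + 1).
have hK : 0 < K by rewrite /K; nra.
have heK : 0 < e / K by apply: Rdiv_lt_0_compat.
have [del [hdel Hdel]] := Hg (line x d t) (e / K) heK.
exists (del / (vnorm d + 1)); split; first by apply: Rdiv_lt_0_compat; lra.
move=> h hh.
have hh' : Rabs h * (vnorm d + 1) < del.
  have := Rmult_lt_compat_r (vnorm d + 1) _ _ ltac:(lra) hh.
  rewrite /Rdiv Rmult_assoc Rinv_l; lra.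
have hv : vnorm (vscale h d) < del by rewrite vnorm_scale; have := Rabs_pos h; nra.
have := Hdel _ hv; rewrite line_shift vnorm_scale.
set w := vsub _ _ => H.
have -> : dot (grad (line x d (t + h))) a - dot (grad (line x d t)) a
    - h * dot (mvmul (hess (line x d t)) d) a = dot w a.
  by rewrite /w !dot_subl mvmul_scale dot_scalel.
apply: Rle_trans (Rabs_dot_le _ _) _.
have hw := vnorm_ge0 w; have hh0 := Rabs_pos h.
apply: (@Rle_trans _ (e / K * (Rabs h * vnorm d) * vnorm a)); first exact: Rmult_le_compat_r.
have : e / K * (vnorm d * vnorm a) <= e.
  have hda : vnorm d * vnorm a <= K by rewrite /K; nra.
  apply: Rle_trans (Rmult_le_compat_l _ _ _ (Rlt_le _ _ heK) hda) _.
  right; field; lra.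
nra.
Qed.

End DerivativesAlongLines.

Lemma eq0_of_Rabs_le_eps D C : 0 <= C -> (forall eta, 0 < eta -> Rabs D <= eta * C) -> D = 0.
Proof.
move=> hC H; case: (Req_dec D 0) => // hD.
have hD' : 0 < Rabs D by apply: Rabs_pos_lt.
have := H (Rabs D / (2 * (C + 1))) ltac:(apply: Rdiv_lt_0_compat; lra).
have -> : Rabs D / (2 * (C + 1)) * C = Rabs D * (C / (2 * (C + 1))) by field; lra.
have : C / (2 * (C + 1)) < 1.
  apply: (Rmult_lt_reg_r (2 * (C + 1))); first lra.
  rewrite /Rdiv Rmult_assoc Rinv_l; lra.
have : 0 <= C / (2 * (C + 1)) by apply: Rmult_le_pos; [lra | apply: Rlt_le; apply: Rinv_0_lt_compat; lra].
nra.
Qed.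

Section HessianSymmetry.
Variables (n : nat) (f : vec n -> R) (grad : vec n -> vec n) (hess : vec n -> mat n).
Hypothesis HC2 : C2_with f grad hess.

Lemma second_difference_mvt x a b s : 0 < s -> exists sg tau, 0 <= sg <= s /\ 0 <= tau <= s /\
  f (line (line x a s) b s) - f (line x a s) - f (line x b s) + f x =
  s * s * dot (mvmul (hess (line (line x a sg) b tau)) b) a.
Proof.
move=> hs; have [Hg [Hj _]] := HC2.
pose g sg := f (line (line x b s) a sg) - f (line x a sg).
pose g1 sg := dot (grad (line (line x b s) a sg)) a - dot (grad (line x a sg)) a.
have dg sg : 0 <= sg <= s -> derivable_pt_lim g sg (g1 sg).
  by move=> _; apply: derivable_pt_lim_minus; exact: derivable_along_line.
have [s0 [e0 h0]] := MVT_cor2 g g1 _ _ hs dg.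
pose k t := dot (grad (line (line x a s0) b t)) a.
pose k1 t := dot (mvmul (hess (line (line x a s0) b t)) b) a.
have dk t : 0 <= t <= s -> derivable_pt_lim k t (k1 t).
  by move=> _; exact: derivable_grad_along_line.
have [t0 [e1 h1]] := MVT_cor2 k k1 _ _ hs dk.
exists s0, t0; split; first lra; split; first lra.
have E1 : g s - g 0 = f (line (line x a s) b s) - f (line x a s) - f (line x b s) + f x.
  by rewrite /g !line0 (line_comm x b a); ring.
have E2 : g1 s0 = k s - k 0 by rewrite /g1 /k line0 (line_comm x a b).
rewrite -E1 e0 E2 e1 /k1; ring.
Qed.

Lemma hess_symmetric_approx x a b eta : 0 < eta ->
  Rabs (dot (mvmul (hess x) a) b - dot (mvmul (hess x) b) a) <= eta * (2 * INR n * vnorm a * vnorm b).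
Proof.
move=> heta; have [_ [_ Hc]] := HC2.
have [del [hdel Hdel]] := Hc x eta heta.
have ha := vnorm_ge0 a; have hb := vnorm_ge0 b.
set s := del / (2 * (vnorm a + vnorm b + 1)).
have hs : 0 < s by apply: Rdiv_lt_0_compat; lra.
have hsd : s * (vnorm a + vnorm b) < del.
  have : s * (2 * (vnorm a + vnorm b + 1)) = del by rewrite /s; field; lra.
  nra.
have near x' y' sg tau : 0 <= sg <= s -> 0 <= tau <= s ->
    vnorm x' + vnorm y' <= vnorm a + vnorm b ->
    forall i j, Rabs (hess (line (line x x' sg) y' tau) i j - hess x i j) <= eta.
  move=> h1 h2 h3 i j; apply: Rlt_le; apply: Hdel.
  apply: Rle_lt_trans (vdist_line_line_le _ _ _ _ _) _.
  rewrite !Rabs_right; try lra.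
  have := vnorm_ge0 x'; have := vnorm_ge0 y'; nra.
have [s1 [t1 [h1 [h2 E1]]]] := second_difference_mvt x a b hs.
have [s2 [t2 [h3 [h4 E2]]]] := second_difference_mvt x b a hs.
have Eq : dot (mvmul (hess (line (line x a s1) b t1)) b) a
        = dot (mvmul (hess (line (line x b s2) a t2)) a) b.
  apply: (Rmult_eq_reg_l (s * s)); last nra.
  rewrite -E1 -E2 (line_comm x a b); ring.
have B1 := Rabs_dot_mvmul_sub_le b a (near a b s1 t1 h1 h2 ltac:(lra)).
have B2 := Rabs_dot_mvmul_sub_le a b (near b a s2 t2 h3 h4 ltac:(lra)).
rewrite Eq in B1.
set D := dot (mvmul (hess (line (line x b s2) a t2)) a) b in B1 B2.
have := Rabs_triang (D - dot (mvmul (hess x) b) a) (- (D - dot (mvmul (hess x) a) b)).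
rewrite Rabs_Ropp.
have -> : D - dot (mvmul (hess x) b) a + - (D - dot (mvmul (hess x) a) b)
  = dot (mvmul (hess x) a) b - dot (mvmul (hess x) b) a by ring.
lra.
Qed.

Lemma hess_symmetric x a b : dot (mvmul (hess x) b) a = dot (mvmul (hess x) a) b.
Proof.
apply: esym; apply: Rminus_diag_uniq.
apply: (eq0_of_Rabs_le_eps (C := 2 * INR n * vnorm a * vnorm b)); last exact: hess_symmetric_approx.
have := pos_INR n; have := vnorm_ge0 a; have := vnorm_ge0 b.
move=> *; apply: Rmult_le_pos; [apply: Rmult_le_pos|]; nra.
Qed.

End HessianSymmetry.

(** * Paths *)

Section Paths.
Variables (n : nat) (S : vec n -> Prop).

Definition continuous_on01 (gamma : R -> vec n) : Prop :=
  forall t, 0 <= t <= 1 -> forall eps, 0 < eps -> exists delta, 0 < delta /\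
    forall s, 0 <= s <= 1 -> Rabs (s - t) < delta -> vdist (gamma s) (gamma t) < eps.

Lemma path_ends p q : path_in S p q -> S p /\ S q.
Proof. move=> [g [g0 [g1 [gS _]]]]; split; [rewrite -g0 | rewrite -g1]; apply: gS; lra. Qed.

Lemma path_refl p : S p -> path_in S p p.
Proof.
move=> Sp; exists (fun _ => p); do 3!split => //; move=> t ht eps he.
exists 1; split; first lra; move=> s hs _; rewrite vdist_self; lra.
Qed.

Lemma segment_path p q : (forall t, 0 <= t <= 1 -> S (line p (vsub q p) t)) -> path_in S p q.
Proof.
move=> H; exists (line p (vsub q p)); split; first by rewrite line0.
split; first by apply: vext => i; rewrite /line /vadd /vscale /vsub; ring.
split => // t ht eps he.
have hd := vnorm_ge0 (vsub q p).
exists (eps / (vnorm (vsub q p) + 1)); split; first by apply: Rdiv_lt_0_compat; lra.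
move=> s hs hst; rewrite /vdist.
have -> : vsub (line p (vsub q p) s) (line p (vsub q p) t) = vscale (s - t) (vsub q p).
  by apply: vext => i; rewrite /line /vadd /vscale /vsub; ring.
rewrite vnorm_scale.
have : Rabs (s - t) * (vnorm (vsub q p) + 1) < eps.
  have := Rmult_lt_compat_r (vnorm (vsub q p) + 1) _ _ ltac:(lra) hst.
  rewrite /Rdiv Rmult_assoc Rinv_l; lra.
have := Rabs_pos (s - t); nra.
Qed.

Definition path_concat (g h : R -> vec n) (t : R) : vec n :=
  if Rle_dec t (1/2) then g (2 * t) else h (2 * t - 1).

Section Concat.
Variables (g h : R -> vec n).
Hypotheses (gc : continuous_on01 g) (hc : continuous_on01 h) (gh : g 1 = h 0).

Lemma path_concat_cont_lt_half t : 0 <= t < 1/2 -> forall eps, 0 < eps ->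
  exists delta, 0 < delta /\ forall s, 0 <= s <= 1 -> Rabs (s - t) < delta ->
    vdist (path_concat g h s) (path_concat g h t) < eps.
Proof.
move=> ht eps he; have [d [hd Hd]] := @gc (2 * t) ltac:(lra) eps he.
exists (Rmin (d / 2) (1/2 - t)); split; first by apply: Rmin_pos; lra.
move=> s hs hst.
have := Rmin_l (d / 2) (1/2 - t); have := Rmin_r (d / 2) (1/2 - t); have := Rle_abs (s - t).
move=> *; rewrite /path_concat; case: Rle_dec => ?; last lra; case: Rle_dec => ?; last lra.
apply: Hd; first lra.
rewrite -Rmult_minus_distr_l Rabs_mult Rabs_right; lra.
Qed.

Lemma path_concat_cont_gt_half t : 1/2 < t <= 1 -> forall eps, 0 < eps ->
  exists delta, 0 < delta /\ forall s, 0 <= s <= 1 -> Rabs (s - t) < delta ->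
    vdist (path_concat g h s) (path_concat g h t) < eps.
Proof.
move=> ht eps he; have [d [hd Hd]] := @hc (2 * t - 1) ltac:(lra) eps he.
exists (Rmin (d / 2) (t - 1/2)); split; first by apply: Rmin_pos; lra.
move=> s hs hst.
have := Rmin_l (d / 2) (t - 1/2); have := Rmin_r (d / 2) (t - 1/2).
have := Rle_abs (t - s); rewrite Rabs_minus_sym.
move=> *; rewrite /path_concat; case: Rle_dec => ?; first lra; case: Rle_dec => ?; first lra.
apply: Hd; first lra.
have -> : 2 * s - 1 - (2 * t - 1) = 2 * (s - t) by ring.
rewrite Rabs_mult Rabs_right; lra.
Qed.

Lemma path_concat_cont_half eps : 0 < eps ->
  exists delta, 0 < delta /\ forall s, 0 <= s <= 1 -> Rabs (s - 1/2) < delta ->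
    vdist (path_concat g h s) (path_concat g h (1/2)) < eps.
Proof.
move=> he; have [d1 [hd1 Hd1]] := @gc 1 ltac:(lra) eps he.
have [d2 [hd2 Hd2]] := @hc 0 ltac:(lra) eps he.
exists (Rmin (d1 / 2) (d2 / 2)); split; first by apply: Rmin_pos; lra.
move=> s hs hst.
have := Rmin_l (d1 / 2) (d2 / 2); have := Rmin_r (d1 / 2) (d2 / 2); move=> *.
rewrite /path_concat; case: (Rle_dec (1/2) (1/2)) => [hq|hq]; last lra.
have -> : 2 * (1/2) = 1 by field.
case: Rle_dec => hs2.
  apply: Hd1; first lra.
  have -> : 2 * s - 1 = 2 * (s - 1/2) by field.
  rewrite Rabs_mult Rabs_right; lra.
rewrite gh; apply: Hd2; first lra.
have -> : 2 * s - 1 - 0 = 2 * (s - 1/2) by field.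
rewrite Rabs_mult Rabs_right; lra.
Qed.

Lemma path_concat_cont : continuous_on01 (path_concat g h).
Proof.
move=> t ht; case: (Rtotal_order t (1/2)) => [hlt|[->|hgt]].
- apply: path_concat_cont_lt_half; lra.
- exact: path_concat_cont_half.
- apply: path_concat_cont_gt_half; lra.
Qed.

End Concat.

Lemma path_trans p q r : path_in S p q -> path_in S q r -> path_in S p r.
Proof.
move=> [g [g0 [g1 [gS gc]]]] [h [h0 [h1 [hS hc]]]].
exists (path_concat g h); split.
  by rewrite /path_concat; case: Rle_dec => hq; [rewrite Rmult_0_r | lra].
split.
  by rewrite /path_concat; case: Rle_dec => hq; [lra | rewrite -h1; congr h; ring].
split; last by apply: path_concat_cont => //; rewrite g1 h0.
move=> t ht; rewrite /path_concat; case: Rle_dec => hh; [apply: gS | apply: hS]; lra.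
Qed.

End Paths.

Definition clamp01 (t : R) := Rmax 0 (Rmin 1 t).

Lemma clamp01_in t : 0 <= clamp01 t <= 1.
Proof.
rewrite /clamp01; split; first exact: Rmax_l.
apply: Rmax_lub; first lra; exact: Rmin_l.
Qed.

Lemma clamp01_id t : 0 <= t <= 1 -> clamp01 t = t.
Proof. move=> ht; rewrite /clamp01 Rmin_right; [rewrite Rmax_right|]; lra. Qed.

Lemma clamp01_lipschitz s t : Rabs (clamp01 s - clamp01 t) <= Rabs (s - t).
Proof.
rewrite /clamp01 /Rmax /Rmin.
repeat case: Rle_dec; intros; rewrite /Rabs; repeat case: Rcase_abs; intros; lra.
Qed.

(* Intermediate value theorem applied to the signed distance to the hyperplane
   [{y | (y - o).u = 0}] along the path, extended to [R] by clamping. *)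
Lemma path_stays_on_side n (S : vec n -> Prop) (u o : vec n) p q :
  dot u u = 1 -> (forall y, S y -> dot (vsub y o) u <> 0) ->
  path_in S p q -> 0 < dot (vsub p o) u -> 0 < dot (vsub q o) u.
Proof.
move=> hu hS [g [g0 [g1 [gS gc]]]] hp.
apply: Rnot_le_lt => hq.
have hq' : dot (vsub q o) u < 0.
  case: (Rle_lt_or_eq_dec _ _ hq) => // e.
  by exfalso; apply: (hS q); [rewrite -g1; apply: gS; lra | ].
pose psi t := - dot (vsub (g (clamp01 t)) o) u.
have cpsi : continuity psi.
  move=> x eps he.
  have [d [hd Hd]] := gc (clamp01 x) (clamp01_in x) eps he.
  exists d; split => // y [_ hy]; change (Rabs (psi y - psi x) < eps); rewrite /psi.
  have hc : Rabs (clamp01 y - clamp01 x) < d by apply: Rle_lt_trans (clamp01_lipschitz _ _) hy.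
  have := Hd (clamp01 y) (clamp01_in y) hc.
  have -> : - dot (vsub (g (clamp01 y)) o) u - - dot (vsub (g (clamp01 x)) o) u
    = - dot (vsub (g (clamp01 y)) (g (clamp01 x))) u by rewrite !dot_subl; ring.
  rewrite Rabs_Ropp => h.
  apply: Rle_lt_trans (Rabs_dot_le _ _) _.
  by rewrite (vnorm_unit hu) Rmult_1_r.
have h0 : psi 0 < 0 by rewrite /psi clamp01_id ?g0; lra.
have h1 : 0 < psi 1 by rewrite /psi clamp01_id ?g1; lra.
have [z [hz ez]] := IVT psi 0 1 cpsi ltac:(lra) h0 h1.
apply: (hS (g (clamp01 z))); first by apply: gS; exact: clamp01_in.
rewrite /psi in ez; lra.
Qed.

(** * Continuity and compactness *)

(* Continuity for the sup norm: equivalent to Euclidean continuity, but it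
   propagates directly through coordinatewise formulas. *)
Definition sup_continuous {m} (F : vec m -> R) := forall x e, 0 < e -> exists d, 0 < d /\
  forall y, (forall i, Rabs (y i - x i) < d) -> Rabs (F y - F x) < e.

Section SupContinuous.
Variable m : nat.
Implicit Types F G : vec m -> R.

Lemma sup_continuous_const a : sup_continuous (fun _ : vec m => a).
Proof. move=> x e he; exists 1; split => [|y _]; rewrite ?Rminus_diag ?Rabs_R0; lra. Qed.

Lemma sup_continuous_coord i : sup_continuous (fun z : vec m => z i).
Proof. move=> x e he; exists e; split => // y hy; exact: hy. Qed.

Lemma sup_continuous_add F G : sup_continuous F -> sup_continuous G ->
  sup_continuous (fun z => F z + G z).
Proof.
move=> hF hG x e he.
have [d1 [h1 H1]] := hF x (e / 2) ltac:(lra).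
have [d2 [h2 H2]] := hG x (e / 2) ltac:(lra).
exists (Rmin d1 d2); split; first by apply: Rmin_pos.
move=> y hy.
have a1 := H1 y (fun i => Rlt_le_trans _ _ _ (hy i) (Rmin_l _ _)).
have a2 := H2 y (fun i => Rlt_le_trans _ _ _ (hy i) (Rmin_r _ _)).
have -> : F y + G y - (F x + G x) = (F y - F x) + (G y - G x) by ring.
apply: Rle_lt_trans (Rabs_triang _ _) _; lra.
Qed.

Lemma sup_continuous_opp F : sup_continuous F -> sup_continuous (fun z => - F z).
Proof.
move=> hF x e he; have [d [h H]] := hF x e he; exists d; split => // y hy.
have -> : - F y - - F x = - (F y - F x) by ring.
rewrite Rabs_Ropp; exact: H.
Qed.

Lemma sup_continuous_sub F G : sup_continuous F -> sup_continuous G ->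
  sup_continuous (fun z => F z - G z).
Proof. move=> hF hG; exact: (sup_continuous_add hF (sup_continuous_opp hG)). Qed.

Lemma sup_continuous_mul F G : sup_continuous F -> sup_continuous G ->
  sup_continuous (fun z => F z * G z).
Proof.
move=> hF hG x e he.
set K := Rabs (F x) + Rabs (G x) + 1.
have hK : 0 < K by rewrite /K; have := Rabs_pos (F x); have := Rabs_pos (G x); lra.
set et := Rmin 1 (e / K).
have het : 0 < et by apply: Rmin_pos; [lra | apply: Rdiv_lt_0_compat].
have het1 : et <= 1 := Rmin_l _ _.
have hetK : et * K <= e.
  have := Rmult_le_compat_r K _ _ (Rlt_le _ _ hK) (Rmin_r 1 (e / K)).
  rewrite -/et /Rdiv Rmult_assoc Rinv_l; lra.
have [d1 [h1 H1]] := hF x et het.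
have [d2 [h2 H2]] := hG x et het.
exists (Rmin d1 d2); split; first by apply: Rmin_pos.
move=> y hy.
have a1 := H1 y (fun i => Rlt_le_trans _ _ _ (hy i) (Rmin_l _ _)).
have a2 := H2 y (fun i => Rlt_le_trans _ _ _ (hy i) (Rmin_r _ _)).
have -> : F y * G y - F x * G x
  = (F y - F x) * (G y - G x) + (F y - F x) * G x + F x * (G y - G x) by ring.
apply: Rle_lt_trans (Rabs_triang _ _) _.
apply: Rle_lt_trans (Rplus_le_compat_r _ _ _ (Rabs_triang _ _)) _.
rewrite !Rabs_mult.
have p1 := Rabs_pos (F y - F x); have p2 := Rabs_pos (G y - G x).
have p3 := Rabs_pos (F x); have p4 := Rabs_pos (G x).
rewrite /K in hetK; nra.
Qed.

Lemma sup_continuous_abs F : sup_continuous F -> sup_continuous (fun z => Rabs (F z)).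
Proof.
move=> hF x e he; have [d [h H]] := hF x e he; exists d; split => // y hy.
apply: Rle_lt_trans (Rabs_triang_inv2 _ _) _; exact: H.
Qed.

Lemma sup_continuous_max F G : sup_continuous F -> sup_continuous G ->
  sup_continuous (fun z => Rmax (F z) (G z)).
Proof.
move=> hF hG.
have E a b : Rmax a b = (a + b + Rabs (a - b)) * / 2.
  rewrite /Rmax /Rabs; case: Rle_dec; case: Rcase_abs; intros; field_simplify; lra.
have := sup_continuous_mul (sup_continuous_add (sup_continuous_add hF hG)
  (sup_continuous_abs (sup_continuous_sub hF hG))) (sup_continuous_const (/ 2)).
move=> h x e he; have [d [hd H]] := h x e he; exists d; split => // y hy.
rewrite !E; exact: H.
Qed.

Lemma sup_continuous_sum (I : Type) (r : seq I) (F : I -> vec m -> R) :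
  (forall i, sup_continuous (F i)) -> sup_continuous (fun z => \big[Rplus/0]_(i <- r) F i z).
Proof.
move=> H; elim: r => [|a r IH] x e he.
  by exists 1; split => [|y _]; rewrite ?big_nil ?Rminus_diag ?Rabs_R0; lra.
have [d [hd Hd]] := sup_continuous_add (H a) IH x he.
by exists d; split => // y hy; rewrite !big_cons; apply: Hd.
Qed.

Lemma sup_continuous_dot k (A B : vec m -> vec k) :
  (forall i, sup_continuous (fun z => A z i)) -> (forall i, sup_continuous (fun z => B z i)) ->
  sup_continuous (fun z => dot (A z) (B z)).
Proof. by move=> hA hB; apply: sup_continuous_sum => i; apply: sup_continuous_mul. Qed.

Lemma sup_continuous_of_continuous F :
  (forall x e, 0 < e -> exists d, 0 < d /\ forall y, vdist y x < d -> Rabs (F y - F x) < e) ->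
  sup_continuous F.
Proof.
move=> H x e he.
have [d [hd Hd]] := H x e he.
have hs := sqrt_pos (INR m).
set d' := d / (sqrt (INR m) + 1).
have hd' : 0 < d' by apply: Rdiv_lt_0_compat; lra.
exists d'; split => // y hy; apply: Hd.
apply: Rle_lt_trans (vnorm_le_coord_bound (Rlt_le _ _ hd') (fun i => Rlt_le _ _ (hy i))) _.
have : d' * (sqrt (INR m) + 1) = d by rewrite /d'; field; lra.
nra.
Qed.

End SupContinuous.

Lemma continuous_of_gradient n (f : vec n -> R) (grad : vec n -> vec n) :
  (forall y, has_gradient_at f y (grad y)) ->
  forall x e, 0 < e -> exists d, 0 < d /\ forall y, vdist y x < d -> Rabs (f y - f x) < e.
Proof.
move=> Hg x e he.
have [d1 [hd1 Hd1]] := Hg x 1 ltac:(lra).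
set K := vnorm (grad x) + 1.
have hK : 0 < K by rewrite /K; have := vnorm_ge0 (grad x); lra.
exists (Rmin d1 (e / (K + 1))); split; first by apply: Rmin_pos => //; apply: Rdiv_lt_0_compat; lra.
move=> y hy.
have hy1 : vnorm (vsub y x) < d1 by apply: Rlt_le_trans hy (Rmin_l _ _).
have hy2 : vnorm (vsub y x) < e / (K + 1) by apply: Rlt_le_trans hy (Rmin_r _ _).
have := Hd1 _ hy1.
have -> : vadd x (vsub y x) = y by apply: vext => i; rewrite /vadd /vsub; ring.
move=> H.
have hc := Rabs_dot_le (grad x) (vsub y x).
have hn := vnorm_ge0 (vsub y x).
have hlip : Rabs (f y - f x) <= K * vnorm (vsub y x).
  have := Rabs_triang (f y - f x - dot (grad x) (vsub y x)) (dot (grad x) (vsub y x)).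
  have -> : f y - f x - dot (grad x) (vsub y x) + dot (grad x) (vsub y x) = f y - f x by ring.
  rewrite /K; lra.
have : (K + 1) * (e / (K + 1)) = e by field; lra.
nra.
Qed.

Module Compactness.
Import order.Order.TTheory ssralg.GRing.Theory ssrnum.Num.Theory.
Import ssrnum matrix boolp classical_sets topology normedtype derive Rstruct_topology.
Import numFieldNormedType.Exports.

Definition row_of {m} (z : vec m) : 'rV[R]_m := \row_(j < m) z j.
Definition vec_of_row {m} (v : 'rV[R]_m) : vec m := fun i => v ord0 i.

Lemma row_ofK m (z : vec m) : vec_of_row (row_of z) = z.
Proof. by apply: functional_extensionality => i; rewrite /vec_of_row mxE. Qed.

Lemma sup_continuous_row m (H : vec m -> R) :
  sup_continuous H -> continuous (H \o vec_of_row).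
Proof.
move=> cH v; apply/(@cvg_ballP _ _ _ _ (nbhs_filter v)) => e /RltP e0.
have [d [d0 Hd]] := cH (vec_of_row v) e e0.
apply/nbhs_ballP; exists d; first exact/RltP.
move=> y [_ byv]; rewrite /ball /= distrC -RabsE; apply/RltP; apply: Hd => i.
by have := byv ord0 i; rewrite /ball /= -RabsE => /RltP; rewrite Rabs_minus_sym.
Qed.

Lemma sublevel_min_attained m (F G : vec m -> R) : sup_continuous F -> sup_continuous G ->
  (exists z, G z <= 0) -> (exists M, forall z, G z <= 0 -> forall i, Rabs (z i) <= M) ->
  exists z, G z <= 0 /\ forall z', G z' <= 0 -> F z <= F z'.
Proof.
move=> cF cG [z0 Gz0] [M HM].
pose A : set 'rV[R]_m := fun v => G (vec_of_row v) <= 0.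
have Acl : closed A.
  have := preimage_closed (fun x _ => @sup_continuous_row _ _ cG x) (@closed_le _ (0 : R)).
  by congr closed; apply: functional_extensionality => v; apply: propext; split => /RleP.
have Abd : bounded_set A.
  exists (Rmax M 0); split; first by rewrite num_real.
  move=> x Mx w Aw /=; rewrite /Num.norm /= mx_normrE; apply/bigmax_leP; split.
    by apply: le_trans (ltW Mx); apply/RleP; apply: Rmax_r.
  move=> [a j] _ /=; rewrite (ord1 a); apply: le_trans (ltW Mx); apply/RleP; rewrite -RabsE.
  exact: Rle_trans (HM (vec_of_row w) Aw j) (Rmax_l _ _).
have A0 : exists v, A v by exists (row_of z0); rewrite /A row_ofK.
have [c Ac Hc] := EVT_min_rV A0 (bounded_closed_compact Abd Acl)
  (continuous_subspaceT (sup_continuous_row cF)).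
exists (vec_of_row c); split; first by rewrite inE in Ac.
move=> z' Gz'; have := Hc (row_of z'); rewrite /= row_ofK => H1; apply/RleP; apply: H1.
by rewrite inE /A row_ofK.
Qed.

End Compactness.

(** * Symmetric matrices with one negative direction *)

Lemma eq0_of_linear_quadratic_ge0 A B : (forall t, 0 <= 2 * t * A + t * t * B) -> A = 0.
Proof.
move=> H; set K := Rabs B + 1.
have hK : 0 < K by rewrite /K; have := Rabs_pos B; lra.
have := H (- A / K); have hB := Rle_abs B.
have -> : 2 * (- A / K) * A + - A / K * (- A / K) * B = (A * A / K) * (- 2 + B / K) by field; lra.
have hBK : B / K < 1.
  by apply: (Rmult_lt_reg_r K) => //; rewrite /Rdiv Rmult_assoc Rinv_l; [rewrite /K; lra | lra].
have hAK : A * A / K * K = A * A by field; lra.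
have : 0 <= A * A / K by apply: Rmult_le_pos; [nra | apply: Rlt_le; apply: Rinv_0_lt_compat].
nra.
Qed.

Lemma unit_scale_exists n (w : vec n) : 0 < dot w w -> exists k, k * k * dot w w = 1.
Proof.
move=> hw; exists (/ sqrt (dot w w)).
have hs := sqrt_lt_R0 _ hw; have hss := sqrt_sqrt _ (Rlt_le _ _ hw).
transitivity (/ sqrt (dot w w) * / sqrt (dot w w) * (sqrt (dot w w) * sqrt (dot w w))).
  by rewrite hss.
field; lra.
Qed.

Section SymmetricMatrix.
Variables (n : nat) (H : mat n).
Hypothesis H_sym : forall a b, dot (mvmul H b) a = dot (mvmul H a) b.

Definition qform (w : vec n) := dot (mvmul H w) w.

Lemma qform_scale a w : qform (vscale a w) = a * a * qform w.
Proof. by rewrite /qform mvmul_scale dot_scalel dot_scaler; ring. Qed.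

Lemma qform_line w z t :
  qform (vadd w (vscale t z)) = qform w + 2 * t * dot (mvmul H w) z + t * t * qform z.
Proof.
rewrite /qform mvmul_add mvmul_scale !dot_addl !dot_addr !dot_scalel !dot_scaler (H_sym w z); ring.
Qed.

Lemma unit_neg_eigenvector : neg_eig_count_ge H 1 ->
  exists u lam, dot u u = 1 /\ mvmul H u = vscale lam u /\ lam < 0.
Proof.
move=> [vs [hli hev]]; have [lam [hl hv]] := hev ord0.
set v := vs ord0 in hv.
have hvv : 0 < dot v v.
  case: (Rle_lt_or_eq_dec _ _ (dot_ge0 v)) => // /esym /dot_eq0 v0.
  suff : (fun _ : 'I_1 => 1) ord0 = 0 by lra.
  apply: (hli (fun _ => 1) _ ord0) => j; rewrite big_ord_recl big_ord0 -/v v0 /vzero /=; ring.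
have [k hk] := unit_scale_exists hvv.
exists (vscale k v), lam; split; first by rewrite dot_scalel dot_scaler -hk; ring.
by split => //; rewrite mvmul_scale hv; apply: vext => i; rewrite /vscale; ring.
Qed.

Variables (u : vec n) (lam : R).
Hypotheses (u_unit : dot u u = 1) (u_eig : mvmul H u = vscale lam u).

Definition unit_orth (w : vec n) := dot w w = 1 /\ dot w u = 0.

Lemma qform_ge_of_unit_orth m : (forall w, unit_orth w -> m <= qform w) ->
  forall w, dot w u = 0 -> m * dot w w <= qform w.
Proof.
move=> hm w hw.
case: (Rle_lt_or_eq_dec _ _ (dot_ge0 w)) => hww; last first.
  by rewrite -hww (dot_eq0 (esym hww)) /qform mvmul_zero dot_zerol; lra.
have [k hk] := unit_scale_exists hww.
have := hm (vscale k w); rewrite qform_scale => h.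
have {}h : m <= k * k * qform w.
  by apply: h; split; rewrite ?dot_scalel ?dot_scaler ?hw -?hk; ring.
have := Rmult_le_compat_r (dot w w) _ _ (dot_ge0 w) h.
have -> : k * k * qform w * dot w w = (k * k * dot w w) * qform w by ring.
rewrite hk; lra.
Qed.

Lemma unit_orth_min_attained : (exists w, unit_orth w) ->
  exists w0, unit_orth w0 /\ forall w, unit_orth w -> qform w0 <= qform w.
Proof.
move=> [z0 hz0].
pose G w := Rmax (Rabs (dot w w - 1)) (Rabs (dot w u)).
have hG w : G w <= 0 <-> unit_orth w.
  rewrite /G /unit_orth; split.
    move=> h; have h1 := Rle_trans _ _ _ (Rmax_l _ _) h; have h2 := Rle_trans _ _ _ (Rmax_r _ _) h.
    have := Rabs_pos (dot w w - 1); have := Rabs_pos (dot w u).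
    by split; [apply: Rminus_diag_uniq|]; apply: NNPP => hne; have := Rabs_pos_lt _ hne; lra.
  by move=> [-> ->]; rewrite Rminus_diag Rabs_R0; apply: Rmax_lub; lra.
have cG : sup_continuous G.
  apply: sup_continuous_max; apply: sup_continuous_abs.
    apply: sup_continuous_sub; last exact: sup_continuous_const.
    by apply: sup_continuous_dot => i; apply: sup_continuous_coord.
  apply: sup_continuous_dot => i; [exact: sup_continuous_coord | exact: sup_continuous_const].
have cQ : sup_continuous qform.
  apply: sup_continuous_dot => i; last exact: sup_continuous_coord.
  apply: sup_continuous_sum => j.
  exact: sup_continuous_mul (sup_continuous_const _) (sup_continuous_coord j).
have hbd : exists M, forall z, G z <= 0 -> forall i, Rabs (z i) <= M.
  exists 1 => z /hG [h1 _] i.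
  by apply: Rle_trans (Rabs_coord_le_vnorm z i) _; rewrite /vnorm h1 sqrt_1; lra.
have [w0 [/hG hw0 hmin]] := Compactness.sublevel_min_attained cQ cG (ex_intro _ z0 (proj2 (hG z0) hz0)) hbd.
by exists w0; split => // w /hG; apply: hmin.
Qed.

(* Lagrange multipliers: [w0 + t z] stays orthogonal to [u] for [z] orthogonal to
   [u], and the minimality of [w0] makes the first-order term vanish. *)
Lemma unit_orth_min_eigenvector w0 : unit_orth w0 ->
  (forall w, unit_orth w -> qform w0 <= qform w) ->
  mvmul H w0 = vscale (qform w0) w0.
Proof.
move=> [hw01 hw0u] hmin; set m := qform w0.
have ext := qform_ge_of_unit_orth hmin.
have orth z : dot z u = 0 -> dot (mvmul H w0) z - m * dot w0 z = 0.
  move=> hz; apply: (eq0_of_linear_quadratic_ge0 (B := qform z - m * dot z z)) => t.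
  have hyu : dot (vadd w0 (vscale t z)) u = 0 by rewrite dot_addl dot_scalel hw0u hz; ring.
  have := ext _ hyu.
  rewrite qform_line !dot_addl !dot_addr !dot_scalel !dot_scaler hw01 (dot_comm z w0) /m; nra.
set r := vsub (mvmul H w0) (vscale m w0).
have hru : dot r u = 0.
  rewrite /r dot_subl dot_scalel hw0u H_sym u_eig dot_scalel (dot_comm u w0) hw0u; ring.
have hr : r = vzero by apply: dot_eq0; have := orth r hru; rewrite {2}/r dot_subl dot_scalel.
apply: vext => i; have := congr1 (fun v => v i) hr; rewrite /r /vsub /vzero /=; lra.
Qed.

Lemma lin_indep2 (a b : vec n) : dot a a = 1 -> dot b b = 1 -> dot a b = 0 ->
  lin_indep (fun i : 'I_2 => if i == ord0 then a else b).
Proof.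
move=> ha hb hab cc hc.
set V := vadd (vscale (cc ord0) a) (vscale (cc (lift ord0 ord0)) b).
have hV : V = vzero.
  apply: vext => j; have := hc j; rewrite !big_ord_recl big_ord0 /= /V /vadd /vscale /vzero.
  by move=> <-; ring.
have e1 : dot V a = 0 by rewrite hV dot_zerol.
have e2 : dot V b = 0 by rewrite hV dot_zerol.
move: e1 e2; rewrite /V !dot_addl !dot_scalel ha hb (dot_comm b a) hab => e1 e2.
case=> [[|[|k]] hi]; last by [].
- have -> : Ordinal hi = ord0 by apply: val_inj.
  lra.
- have -> : Ordinal hi = lift ord0 ord0 by apply: val_inj.
  lra.
Qed.

(* A minimiser with nonpositive value would be a second negative eigenvector or
   a kernel vector; both are excluded. *)
Lemma posdef_on_orthogonal : lam < 0 -> invertible H -> ~ neg_eig_count_ge H 2 ->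
  exists mu, 0 < mu /\ forall w, dot w u = 0 -> mu * dot w w <= qform w.
Proof.
move=> hlam hinv hn2.
case: (classic (exists w, unit_orth w)) => [hne|hemp]; last first.
  exists 1; split; first lra.
  by apply: qform_ge_of_unit_orth => z hz; case: hemp; exists z.
have [w0 [hw0 hmin]] := unit_orth_min_attained hne.
have heig := unit_orth_min_eigenvector hw0 hmin.
exists (qform w0); split; last exact: qform_ge_of_unit_orth.
have [hw01 hw0u] := hw0.
case: (Rtotal_order (qform w0) 0) => [hneg|[hz|//]]; exfalso.
  apply: hn2; exists (fun i : 'I_2 => if i == ord0 then u else w0).
  split; first by apply: lin_indep2; rewrite // dot_comm.
  by case=> [[|[|k]] hi] //=; [exists lam | exists (qform w0)].
have : w0 = vzero.
  apply: (invertible_ker hinv); rewrite heig hz.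
  by apply: vext => i; rewrite /vscale /vzero; ring.
by move=> e; move: hw01; rewrite e dot_zerol; lra.
Qed.

End SymmetricMatrix.

(** * The local chart at the saddle *)

(* An entrywise deviation [eta] of the Hessian moves its quadratic form by at most
   [eta n |d| |e|] (see [Rabs_dot_mvmul_sub_le]); [sd_eta_lam] and [sd_eta_mu] keep
   this below half of the curvatures [lam] and [mu] on the ball of radius [th0]. *)
Record saddle_data n (f : vec n -> R) (grad : vec n -> vec n) (hess : vec n -> mat n)
    (xbar : vec n) (c : R) (u : vec n) (lam mu eta th0 : R) : Prop := SaddleData {
  sd_C2 : C2_with f grad hess;
  sd_grad : grad xbar = vzero;
  sd_value : f xbar = c;
  sd_unit : dot u u = 1;
  sd_eig : mvmul (hess xbar) u = vscale lam u;
  sd_lam : lam < 0;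
  sd_mu : 0 < mu;
  sd_posdef : forall w, dot w u = 0 -> mu * dot w w <= dot (mvmul (hess xbar) w) w;
  sd_eta : 0 < eta;
  sd_eta_lam : eta * INR n <= - lam / 2;
  sd_eta_mu : eta * INR n <= mu / 8;
  sd_th0 : 0 < th0;
  sd_hess_near : forall y, vdist y xbar < th0 -> forall i j, Rabs (hess y i j - hess xbar i j) < eta
}.

Lemma saddle_data_opp n (f : vec n -> R) grad hess xbar c u lam mu eta th0 :
  saddle_data f grad hess xbar c u lam mu eta th0 ->
  saddle_data f grad hess xbar c (vscale (-1) u) lam mu eta th0.
Proof.
case=> C2 g0 fx uu eig hlam hmu posdef *; constructor => //.
- by rewrite dot_scalel dot_scaler uu; ring.
- by rewrite mvmul_scale eig; apply: vext => i; rewrite /vscale; ring.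
- by move=> w hw; apply: posdef; move: hw; rewrite dot_scaler; lra.
Qed.

Definition cone_slope (lam mu : R) : R := 1 + 6 * (- lam) / mu.

Lemma cone_slope_ge1 lam mu : lam < 0 -> 0 < mu -> 1 <= cone_slope lam mu.
Proof.
move=> hlam hmu; rewrite /cone_slope; suff : 0 <= 6 * - lam / mu by lra.
by apply: Rmult_le_pos; [lra | apply: Rlt_le; apply: Rinv_0_lt_compat].
Qed.

(* The factor [16 = 2^2 * 2^2] lets the cone around the axis up to height [2 s1]
   fit in the ball of radius [th / 2]. *)
Record sublevel_scale (lam mu th0 th ep s1 : R) : Prop := SublevelScale {
  ss_th : 0 < th;
  ss_th_le : th <= th0;
  ss_ep : 0 < ep;
  ss_s1 : 0 < s1;
  ss_level : lam / 4 * (s1 * s1) <= - ep;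
  ss_cone : 16 * (1 + cone_slope lam mu) * (s1 * s1) < th * th
}.

Section SaddleChart.
Variables (n : nat) (f : vec n -> R) (grad : vec n -> vec n) (hess : vec n -> mat n).
Variables (xbar : vec n) (c : R) (u : vec n) (lam mu eta th0 : R).
Hypothesis D : saddle_data f grad hess xbar c u lam mu eta th0.

Let f_C2 := sd_C2 D.
Let grad_xbar := sd_grad D.
Let f_xbar := sd_value D.
Let u_unit := sd_unit D.
Let u_eig := sd_eig D.
Let lam_neg := sd_lam D.
Let mu_pos := sd_mu D.
Let hess_posdef := sd_posdef D.
Let eta_pos := sd_eta D.
Let eta_lam := sd_eta_lam D.
Let eta_mu := sd_eta_mu D.
Let th0_pos := sd_th0 D.
Let hess_near := sd_hess_near D.

Let grad_f y : has_gradient_at f y (grad y). Proof. by case: f_C2. Qed.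
Let jac_grad y : has_jacobian_at grad y (hess y). Proof. by case: f_C2 => _ []. Qed.

Let dline p d t := derivable_along_line p d t grad_f.
Let dgrad p d a t := derivable_grad_along_line p d a t jac_grad.

Definition chart (s : R) (w : vec n) : vec n := vadd xbar (vadd (vscale s u) w).
Definition ucoord (y : vec n) : R := dot (vsub y xbar) u.
Definition uperp (y : vec n) : vec n := vsub (vsub y xbar) (vscale (ucoord y) u).

Lemma chart_decomp y : y = chart (ucoord y) (uperp y).
Proof. apply: vext => i; rewrite /chart /uperp /vsub /vadd /vscale; ring. Qed.

Lemma uperp_orth y : dot (uperp y) u = 0.
Proof. by rewrite /uperp dot_subl dot_scalel u_unit /ucoord; ring. Qed.

Lemma sqdist_chart s w : dot w u = 0 ->
  dot (vsub (chart s w) xbar) (vsub (chart s w) xbar) = s * s + dot w w.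
Proof.
move=> h; have -> : vsub (chart s w) xbar = vadd (vscale s u) w.
  by apply: vext => i; rewrite /chart /vsub /vadd /vscale; ring.
rewrite !dot_addl !dot_addr !dot_scalel !dot_scaler u_unit h (dot_comm u w) h; ring.
Qed.

Lemma ucoord_chart s w : dot w u = 0 -> ucoord (chart s w) = s.
Proof.
move=> hw; rewrite /ucoord; have -> : vsub (chart s w) xbar = vadd (vscale s u) w.
  by apply: vext => i; rewrite /chart /vsub /vadd /vscale; ring.
by rewrite dot_addl dot_scalel u_unit hw; ring.
Qed.

Lemma uperp_chart s w : dot w u = 0 -> uperp (chart s w) = w.
Proof.
move=> hw; rewrite /uperp ucoord_chart //.
by apply: vext => i; rewrite /chart /vsub /vadd /vscale; ring.
Qed.

Lemma sqdist_decomp y :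
  dot (vsub y xbar) (vsub y xbar) = ucoord y * ucoord y + dot (uperp y) (uperp y).
Proof. by rewrite {1 2}(chart_decomp y) sqdist_chart // uperp_orth. Qed.

Lemma chart_in_ball s w r : 0 < r -> dot w u = 0 -> s * s + dot w w < r * r ->
  vdist (chart s w) xbar < r.
Proof. by move=> hr hw h; rewrite /vdist; apply/vnorm_lt => //; rewrite sqdist_chart. Qed.

Lemma chart_u_line s w : chart s w = line (vadd xbar w) u s.
Proof. apply: vext => i; rewrite /chart /line /vadd /vscale; ring. Qed.

Lemma chart_w_line s w t : chart s (vscale t w) = line (line xbar u s) w t.
Proof. apply: vext => i; rewrite /chart /line /vadd /vscale; ring. Qed.

Lemma hess_near_dot y d e : vdist y xbar < th0 ->
  Rabs (dot (mvmul (hess y) d) e - dot (mvmul (hess xbar) d) e) <= eta * INR n * vnorm d * vnorm e.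
Proof. move=> hy; apply: Rabs_dot_mvmul_sub_le => i j; apply: Rlt_le; exact: hess_near. Qed.

Lemma hess_near_u y : vdist y xbar < th0 -> 3 * lam / 2 <= dot (mvmul (hess y) u) u <= lam / 2.
Proof.
move=> hy; have := hess_near_dot u u hy.
rewrite u_eig dot_scalel u_unit (vnorm_unit u_unit) => /Rabs_le_between.
nra.
Qed.

Lemma hess_near_orth y w : vdist y xbar < th0 -> dot w u = 0 ->
  mu / 2 * dot w w <= dot (mvmul (hess y) w) w.
Proof.
move=> hy hw; have := hess_near_dot w w hy; move/Rabs_le_between.
have := hess_posdef hw; have := vnorm_sq w; have := pos_INR n; nra.
Qed.

Lemma line_u_in_ball s : Rabs s < th0 -> vdist (line xbar u s) xbar < th0.
Proof. by rewrite vdist_line (vnorm_unit u_unit) Rmult_1_r. Qed.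

Lemma f_axis_upper s : 0 <= s < th0 -> f (line xbar u s) <= c + lam / 4 * (s * s).
Proof.
move=> hs.
have := taylor_upper (a := 0) (b := s) (M := lam / 2) ltac:(lra) (fun x _ => dline xbar u x)
  (fun x _ => dgrad xbar u u x).
rewrite line0 grad_xbar dot_zerol f_xbar Rminus_0_r => H.
apply: Rle_trans (H _) _; last by right; field.
move=> x hx; apply: (proj2 (hess_near_u _)); apply: line_u_in_ball; rewrite Rabs_right; lra.
Qed.

Lemma f_axis_lower s : 0 <= s < th0 -> c + 3 * lam / 4 * (s * s) <= f (line xbar u s).
Proof.
move=> hs.
have := taylor_lower (a := 0) (b := s) (m := 3 * lam / 2) ltac:(lra) (fun x _ => dline xbar u x)
  (fun x _ => dgrad xbar u u x).
rewrite line0 grad_xbar dot_zerol f_xbar Rminus_0_r => H.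
apply: Rle_trans (H _); first by right; field.
move=> x hx; apply: (proj1 (hess_near_u _)); apply: line_u_in_ball; rewrite Rabs_right; lra.
Qed.

Lemma grad_axis_orth s w : 0 <= s < th0 -> dot w u = 0 ->
  Rabs (dot (grad (line xbar u s)) w) <= eta * INR n * vnorm w * s.
Proof.
move=> hs hw.
have := Rabs_increment_le (a := 0) (b := s) (K := eta * INR n * vnorm w) ltac:(lra)
  (fun x _ => dgrad xbar u w x).
rewrite line0 grad_xbar dot_zerol !Rminus_0_r; apply=> x hx.
have := hess_near_dot u w (line_u_in_ball (s := x) ltac:(rewrite Rabs_right; lra)).
by rewrite u_eig dot_scalel (dot_comm u w) hw Rmult_0_r Rminus_0_r (vnorm_unit u_unit) Rmult_1_r.
Qed.

(* Taylor expansion in [w] at the axis point, fed with the axis and cross-term estimates. *)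
Lemma f_chart_lower s w : 0 <= s -> dot w u = 0 -> s * s + dot w w < th0 * th0 ->
  c + 3 * lam / 4 * (s * s) - eta * INR n * vnorm w * s + mu / 4 * dot w w <= f (chart s w).
Proof.
move=> hs hw hb.
have hs0 : s < th0 by apply: lt_of_sqr_lt => //; have := dot_ge0 w; lra.
have := taylor_lower (a := 0) (b := 1) (m := mu / 2 * dot w w) ltac:(lra)
  (fun x _ => dline (line xbar u s) w x) (fun x _ => dgrad (line xbar u s) w w x).
rewrite line0 -[line _ w 1](chart_w_line s w 1) Rminus_0_r.
have -> : vscale 1 w = w by apply: vext => i; rewrite /vscale; ring.
move=> H.
have hax := f_axis_lower (conj hs hs0).
have hgc := grad_axis_orth (conj hs hs0) hw.
have := Rle_abs (- dot (grad (line xbar u s)) w); rewrite Rabs_Ropp => hgc'.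
suff : f (line xbar u s) + dot (grad (line xbar u s)) w * 1 + mu / 2 * dot w w / 2 * (1 * 1)
  <= f (chart s w) by lra.
apply: H => x hx; rewrite -chart_w_line.
apply: hess_near_orth => //; apply: chart_in_ball => //; first by rewrite dot_scalel hw; ring.
by have := dot_scale_le w hx; lra.
Qed.

Lemma f_ge_on_hyperplane w : dot w u = 0 -> dot w w < th0 * th0 -> c <= f (chart 0 w).
Proof.
move=> hw hb; have := f_chart_lower (s := 0) (w := w) ltac:(lra) hw ltac:(lra).
have := dot_ge0 w; nra.
Qed.

(* Below level [c] the cross term cannot beat [mu |w|^2 / 8] unless [|w|] is
   comparable to [s]: the sublevel set lies in a cone around the axis. *)
Lemma f_chart_lt_cone s w : 0 <= s -> dot w u = 0 -> s * s + dot w w < th0 * th0 ->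
  f (chart s w) < c -> dot w w <= cone_slope lam mu * (s * s).
Proof.
move=> hs hw hb hf.
have h := f_chart_lower hs hw hb.
have hn := vnorm_ge0 w; have hsq := vnorm_sq w; have hi := pos_INR n.
have hK : cone_slope lam mu * (s * s) = s * s + 6 * - lam / mu * (s * s) by rewrite /cone_slope; ring.
have hKs : 0 <= 6 * - lam / mu * (s * s).
  by apply: Rmult_le_pos; [apply: Rmult_le_pos; [lra | apply: Rlt_le; apply: Rinv_0_lt_compat] | nra].
case: (Rle_lt_dec (vnorm w) s) => hws; first by rewrite hK -hsq; nra.
have hcross : eta * INR n * vnorm w * s <= mu / 8 * dot w w.
  have hen := Rmult_le_pos _ _ (Rlt_le _ _ eta_pos) hi.
  rewrite -hsq; apply: (@Rle_trans _ (eta * INR n * (vnorm w * vnorm w))).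
    by rewrite Rmult_assoc; apply: Rmult_le_compat_l => //; apply: Rmult_le_compat_l => //; lra.
  by apply: Rmult_le_compat_r; [nra | lra].
have : mu / 8 * dot w w < 3 * (- lam) / 4 * (s * s) by lra.
have -> : 3 * - lam / 4 * (s * s) = mu / 8 * (6 * - lam / mu * (s * s)) by field; lra.
move=> /(Rmult_lt_reg_l (mu / 8) _ _ ltac:(lra)); nra.
Qed.

Lemma f_chart_nonincreasing w s sg : dot w u = 0 -> 0 <= s <= sg -> sg * sg + dot w w < th0 * th0 ->
  f (chart s w) < c -> f (chart sg w) <= f (chart s w).
Proof.
move=> hw hs hb hf.
have := le_Rmax_of_convex (psi := fun t => - f (line (vadd xbar w) u t))
  (psi1 := fun t => - dot (grad (line (vadd xbar w) u t)) u)
  (psi2 := fun t => - dot (mvmul (hess (line (vadd xbar w) u t)) u) u) (a := 0) (b := sg) (t := s) hs.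
rewrite -!chart_u_line => H.
have hg0 : c <= f (chart 0 w) by apply: f_ge_on_hyperplane => //; have := dot_ge0 w; nra.
suff : - f (chart s w) <= Rmax (- f (chart 0 w)) (- f (chart sg w)).
  by rewrite /Rmax; case: Rle_dec; lra.
apply: H.
- move=> x _; exact: derivable_pt_lim_opp (dline _ u x).
- move=> x _; exact: derivable_pt_lim_opp (dgrad _ u u x).
- move=> x hx /=; rewrite -chart_u_line.
  suff h : dot (mvmul (hess (chart x w)) u) u <= lam / 2 by lra.
  apply: (proj2 (hess_near_u _)); apply: chart_in_ball => //.
  have : x * x <= sg * sg by nra.
  lra.
Qed.

Lemma f_chart_segment_le w s t : dot w u = 0 -> 0 <= t <= 1 -> s * s + dot w w < th0 * th0 ->
  f (chart s (vscale t w)) <= Rmax (f (chart s vzero)) (f (chart s w)).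
Proof.
move=> hw ht hb.
have := le_Rmax_of_convex (a := 0) (b := 1) (t := t) ht
  (fun x _ => dline (line xbar u s) w x) (fun x _ => dgrad (line xbar u s) w w x).
have e0 : chart s vzero = line (line xbar u s) w 0.
  by apply: vext => i; rewrite /chart /line /vadd /vscale /vzero; ring.
have e1 : chart s w = line (line xbar u s) w 1.
  by apply: vext => i; rewrite /chart /line /vadd /vscale; ring.
rewrite chart_w_line e0 e1; apply=> x hx; rewrite -chart_w_line.
apply: Rle_trans (hess_near_orth _ hw); first by have := dot_ge0 w; nra.
apply: chart_in_ball => //; first by rewrite dot_scalel hw; ring.
by have := dot_scale_le w hx; lra.
Qed.

Variables (th ep s1 : R).
Hypothesis Sc : sublevel_scale lam mu th0 th ep s1.

Let th_pos := ss_th Sc.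
Let th_le := ss_th_le Sc.
Let ep_pos := ss_ep Sc.
Let s1_pos := ss_s1 Sc.
Let s1_level := ss_level Sc.
Let s1_cone : (1 + cone_slope lam mu) * (s1 * s1) < th * th.
Proof. have := ss_cone Sc; have := cone_slope_ge1 lam_neg mu_pos; nra. Qed.

Definition sublevel (x : vec n) : Prop := f x <= c - ep /\ open_ball xbar th x.

Let th_sqr_le : th * th <= th0 * th0.
Proof. nra. Qed.

Lemma sublevel_sqdist y : sublevel y -> ucoord y * ucoord y + dot (uperp y) (uperp y) < th * th.
Proof. by move=> [_ /(vnorm_lt _ th_pos)]; rewrite sqdist_decomp. Qed.

Lemma sublevel_ucoord_neq0 y : sublevel y -> ucoord y <> 0.
Proof.
move=> hS e; have hb := sublevel_sqdist hS; have hth := th_sqr_le.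
have := f_ge_on_hyperplane (uperp_orth y) ltac:(rewrite e in hb; lra).
rewrite -e -chart_decomp; case: hS => hf _; lra.
Qed.

Lemma sublevel_cone y : sublevel y -> 0 <= ucoord y ->
  dot (uperp y) (uperp y) <= cone_slope lam mu * (ucoord y * ucoord y).
Proof.
move=> hS hs; have hb := sublevel_sqdist hS; have hth := th_sqr_le.
apply: f_chart_lt_cone => //; [exact: uperp_orth | lra |].
by rewrite -chart_decomp; case: hS => hf _; lra.
Qed.

Lemma axis_in_sublevel s : s1 <= s -> s * s < th * th -> sublevel (line xbar u s).
Proof.
move=> h1 h2; have hth := th_sqr_le; split.
  have hs : 0 <= s < th0.
    by split; [lra | apply: (lt_of_sqr_lt (a := s) th0_pos); lra].
  have := f_axis_upper hs.
  suff : lam / 4 * (s * s) <= lam / 4 * (s1 * s1) by lra.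
  by apply: Rmult_le_compat_neg_l; [lra | apply: Rmult_le_compat; lra].
rewrite /open_ball /vdist; apply/vnorm_lt => //.
by rewrite vsub_line dot_scalel dot_scaler u_unit; lra.
Qed.

Section PathToAxis.
Variables (s : R) (w : vec n).
Hypotheses (w_orth : dot w u = 0) (s_pos : 0 < s) (chart_sub : sublevel (chart s w)).

Let s' := Rmax s s1.

Let s'_ball : s' * s' + dot w w < th * th.
Proof.
have hb := sublevel_sqdist chart_sub; rewrite ucoord_chart // uperp_chart // in hb.
rewrite /s' /Rmax; case: Rle_dec => hh; last lra.
have := sublevel_cone chart_sub; rewrite ucoord_chart // uperp_chart // => hK.
have : dot w w <= cone_slope lam mu * (s1 * s1).
  apply: Rle_trans (hK (Rlt_le _ _ s_pos)) _.
  by apply: Rmult_le_compat_l; [have := cone_slope_ge1 lam_neg mu_pos; lra | apply: Rmult_le_compat; lra].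
have := s1_cone; nra.
Qed.

Lemma chart_u_segment_in_sublevel sg : s <= sg <= s' -> sublevel (chart sg w).
Proof.
move=> hsg; have hb := s'_ball.
have hsg2 : sg * sg <= s' * s' by nra.
split; last by apply: chart_in_ball => //; lra.
case: chart_sub => hf _.
have := f_chart_nonincreasing w_orth (s := s) (sg := sg) ltac:(lra) ltac:(lra) ltac:(lra).
lra.
Qed.

Lemma path_chart_u_segment : path_in sublevel (chart s' w) (chart s w).
Proof.
apply: segment_path => t ht.
have -> : line (chart s' w) (vsub (chart s w) (chart s' w)) t = chart (s' + t * (s - s')) w.
  by apply: vext => i; rewrite /chart /line /vadd /vsub /vscale; ring.
have hs's : s <= s' := Rmax_l _ _.
apply: chart_u_segment_in_sublevel; nra.
Qed.

Lemma path_axis_to_chart : path_in sublevel (line xbar u s') (chart s' w).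
Proof.
apply: segment_path => t ht.
have -> : line (line xbar u s') (vsub (chart s' w) (line xbar u s')) t = chart s' (vscale t w).
  by apply: vext => i; rewrite /chart /line /vadd /vsub /vscale; ring.
have hb := s'_ball; have hs's1 : s1 <= s' := Rmax_r _ _; have hs's : s <= s' := Rmax_l _ _.
have hth := th_sqr_le.
split; last first.
  apply: chart_in_ball => //; first by rewrite dot_scalel w_orth; ring.
  by have := dot_scale_le w ht; lra.
apply: Rle_trans (f_chart_segment_le (s := s') w_orth ht ltac:(lra)) _.
apply: Rmax_lub.
  have -> : chart s' vzero = line xbar u s'.
    by apply: vext => i; rewrite /chart /line /vadd /vscale /vzero; ring.
  by case: (axis_in_sublevel hs's1 ltac:(have := dot_ge0 w; lra)).
by case: (chart_u_segment_in_sublevel (sg := s') ltac:(lra)).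
Qed.

Lemma path_along_axis : path_in sublevel (line xbar u s1) (line xbar u s').
Proof.
apply: segment_path => t ht.
have -> : line (line xbar u s1) (vsub (line xbar u s') (line xbar u s1)) t
  = line xbar u (s1 + t * (s' - s1)) by apply: vext => i; rewrite /line /vadd /vsub /vscale; ring.
have hb := s'_ball; have hs's1 : s1 <= s' := Rmax_r _ _.
apply: axis_in_sublevel; first nra.
have : 0 <= s1 + t * (s' - s1) <= s' by nra.
have := dot_ge0 w; nra.
Qed.

End PathToAxis.

(* Walk up along [u] to radius [max s s1], then straight to the axis, then along the axis. *)
Lemma path_to_axis y : sublevel y -> 0 < ucoord y -> path_in sublevel (line xbar u s1) y.
Proof.
move=> hS hs; rewrite (chart_decomp y) in hS *.
have hw := uperp_orth y.
apply: path_trans (path_along_axis hw hs hS) _.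
apply: path_trans (path_axis_to_chart hw hs hS) _.
exact: path_chart_u_segment.
Qed.

Lemma sublevel_path_same_side p q : path_in sublevel p q -> 0 < ucoord p -> 0 < ucoord q.
Proof. by apply: path_stays_on_side u_unit _ => y /sublevel_ucoord_neq0. Qed.

End SaddleChart.

(** * The sublevel set *)

Definition vfst {n} (z : vec (n + n)) : vec n := fun j => z (lshift n j).
Definition vsnd {n} (z : vec (n + n)) : vec n := fun j => z (rshift n j).
Definition vpair {n} (x y : vec n) : vec (n + n) :=
  fun i => match fintype.split i with inl j => x j | inr j => y j end.

Lemma vpairK1 n (x y : vec n) : vfst (vpair x y) = x.
Proof.
by apply: vext => j; rewrite /vfst /vpair -[lshift n j]/(fintype.unsplit (inl j)) fintype.unsplitK.
Qed.

Lemma vpairK2 n (x y : vec n) : vsnd (vpair x y) = y.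
Proof.
by apply: vext => j; rewrite /vsnd /vpair -[rshift n j]/(fintype.unsplit (inr j)) fintype.unsplitK.
Qed.

Lemma sup_continuous_vfst n (F : vec n -> R) :
  sup_continuous F -> sup_continuous (fun z => F (vfst z)).
Proof.
move=> h x e /(h (vfst x)) [d [hd Hd]].
by exists d; split => // y hy; apply: Hd => j; apply: hy.
Qed.

Lemma sup_continuous_vsnd n (F : vec n -> R) :
  sup_continuous F -> sup_continuous (fun z => F (vsnd z)).
Proof.
move=> h x e /(h (vsnd x)) [d [hd Hd]].
by exists d; split => // y hy; apply: Hd => j; apply: hy.
Qed.

Lemma Rmax_le0 a b : Rmax a b <= 0 <-> a <= 0 /\ b <= 0.
Proof.
split; last by move=> [h1 h2]; apply: Rmax_lub.
by move=> h; split; [apply: Rle_trans (Rmax_l _ _) h | apply: Rle_trans (Rmax_r _ _) h].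
Qed.

Section SaddleSublevel.
Variables (n : nat) (f : vec n -> R) (grad : vec n -> vec n) (hess : vec n -> mat n).
Variables (xbar : vec n) (c : R) (u : vec n) (lam mu eta th0 : R).
Hypothesis D : saddle_data f grad hess xbar c u lam mu eta th0.
Variables (th ep s1 : R).
Hypothesis Sc : sublevel_scale lam mu th0 th ep s1.

Let D' := saddle_data_opp D.
Let S := sublevel f xbar c th ep.
Let sc := ucoord xbar u.
Let a := line xbar u s1.
Let b := line xbar (vscale (-1) u) s1.

Let ucoord_opp y : ucoord xbar (vscale (-1) u) y = - sc y.
Proof. by rewrite /sc /ucoord dot_scaler; ring. Qed.

Let s1_sqr_lt : s1 * s1 < th * th.
Proof. by have := ss_cone Sc; have := cone_slope_ge1 (sd_lam D) (sd_mu D); have := ss_s1 Sc; nra. Qed.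

Let Sa : S a := axis_in_sublevel D Sc (Rle_refl s1) s1_sqr_lt.
Let Sb : S b := axis_in_sublevel D' Sc (Rle_refl s1) s1_sqr_lt.

Let sc_a : sc a = s1.
Proof. by rewrite /sc /ucoord vsub_line dot_scalel (sd_unit D); ring. Qed.

Let sc_b : sc b = - s1.
Proof. by rewrite -[sc b]Ropp_involutive -ucoord_opp /b /ucoord vsub_line dot_scalel (sd_unit D'); ring. Qed.

Let path_neg p q : path_in S p q -> sc p < 0 -> sc q < 0.
Proof.
move=> /(sublevel_path_same_side D' Sc); rewrite !ucoord_opp => h hp.
by have := h ltac:(lra); lra.
Qed.

Lemma sublevel_exactly_two_components : exactly_two_path_components S.
Proof.
exists a, b; do 2!split => //; split.
  move=> hp; have := sublevel_path_same_side D Sc hp; rewrite -/sc sc_a sc_b.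
  by have h1 := ss_s1 Sc; move/(_ h1); lra.
move=> x hx; case: (Rtotal_order (sc x) 0) => [hneg|[hz|hpos]].
- by right; apply: (path_to_axis D' Sc) => //; rewrite ucoord_opp; lra.
- by case: (sublevel_ucoord_neq0 D Sc hx).
- by left; apply: (path_to_axis D Sc).
Qed.

(* Pairs [(x, y)] on either side of the hyperplane, within the closed ball of
   radius [th / 2]: a compact set on which the distance attains its minimum. *)
Definition half_ball_pair (x y : vec n) : Prop :=
  (f x <= c - ep /\ f y <= c - ep) /\ (0 <= sc x /\ sc y <= 0) /\
  (dot (vsub x xbar) (vsub x xbar) <= th * th / 4 /\ dot (vsub y xbar) (vsub y xbar) <= th * th / 4).

Let sqdist_axis : dot (vsub a xbar) (vsub a xbar) = s1 * s1 /\ dot (vsub b xbar) (vsub b xbar) = s1 * s1.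
Proof.
by rewrite /a /b !vsub_line !dot_scalel !dot_scaler (sd_unit D); split; ring.
Qed.

Lemma axis_half_ball_pair : half_ball_pair a b /\ dot (vsub a b) (vsub a b) = 4 * (s1 * s1).
Proof.
have [da db] := sqdist_axis; have hK := ss_cone Sc; have hK1 := cone_slope_ge1 (sd_lam D) (sd_mu D).
have := ss_s1 Sc; case: Sa => fa _; case: Sb => fb _ => hs1.
split; first by rewrite /half_ball_pair sc_a sc_b da db; do 3!split => //; try lra; nra.
have -> : vsub a b = vscale (2 * s1) u by apply: vext => i; rewrite /a /b /line /vsub /vadd /vscale; ring.
by rewrite dot_scalel dot_scaler (sd_unit D); ring.
Qed.

Lemma half_ball_coord_bound v : dot (vsub v xbar) (vsub v xbar) <= th * th / 4 ->
  forall j, Rabs (v j) <= vnorm xbar + th / 2.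
Proof.
move=> hv j; have hv2 : vnorm (vsub v xbar) <= th / 2 by apply/vnorm_le; have := ss_th Sc; lra.
have -> : v j = vsub v xbar j + xbar j by rewrite /vsub; ring.
apply: Rle_trans (Rabs_triang _ _) _.
have := Rabs_coord_le_vnorm (vsub v xbar) j; have := Rabs_coord_le_vnorm xbar j; lra.
Qed.

Definition half_ball_gap (z : vec (n + n)) : R :=
  Rmax (Rmax (f (vfst z) - (c - ep)) (f (vsnd z) - (c - ep)))
    (Rmax (Rmax (- sc (vfst z)) (sc (vsnd z)))
      (Rmax (dot (vsub (vfst z) xbar) (vsub (vfst z) xbar) - th * th / 4)
            (dot (vsub (vsnd z) xbar) (vsub (vsnd z) xbar) - th * th / 4))).

Lemma half_ball_gap_le0 z : half_ball_gap z <= 0 <-> half_ball_pair (vfst z) (vsnd z).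
Proof. by rewrite /half_ball_gap /half_ball_pair !Rmax_le0; lra. Qed.

Lemma sup_continuous_half_ball_gap : sup_continuous half_ball_gap.
Proof.
have cf : sup_continuous f := sup_continuous_of_continuous (continuous_of_gradient (proj1 (sd_C2 D))).
have csc : sup_continuous sc.
  apply: sup_continuous_dot => i; last exact: sup_continuous_const.
  exact: sup_continuous_sub (sup_continuous_coord i) (sup_continuous_const _).
have cd : sup_continuous (fun y : vec n => dot (vsub y xbar) (vsub y xbar)).
  by apply: sup_continuous_dot => i;
    exact: sup_continuous_sub (sup_continuous_coord i) (sup_continuous_const _).
repeat apply: sup_continuous_max.
- exact: sup_continuous_sub (sup_continuous_vfst cf) (sup_continuous_const _).
- exact: sup_continuous_sub (sup_continuous_vsnd cf) (sup_continuous_const _).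
- exact: sup_continuous_opp (sup_continuous_vfst csc).
- exact: sup_continuous_vsnd csc.
- exact: sup_continuous_sub (sup_continuous_vfst cd) (sup_continuous_const _).
- exact: sup_continuous_sub (sup_continuous_vsnd cd) (sup_continuous_const _).
Qed.

Lemma half_ball_gap_bounded z : half_ball_gap z <= 0 -> forall i, Rabs (z i) <= vnorm xbar + th / 2.
Proof.
move=> /half_ball_gap_le0 [_ [_ [h1 h2]]] i; case E: (fintype.split i) => [j|j].
- have -> : i = lshift n j by rewrite -(fintype.splitK i) E.
  exact: half_ball_coord_bound h1 j.
- have -> : i = rshift n j by rewrite -(fintype.splitK i) E.
  exact: half_ball_coord_bound h2 j.
Qed.

Lemma closest_half_ball_pair : exists x y, half_ball_pair x y /\
  forall x' y', half_ball_pair x' y' -> dot (vsub x y) (vsub x y) <= dot (vsub x' y') (vsub x' y').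
Proof.
have cF : sup_continuous (fun z : vec (n + n) => dot (vsub (vfst z) (vsnd z)) (vsub (vfst z) (vsnd z))).
  by apply: sup_continuous_dot => i; apply: sup_continuous_sub; apply: sup_continuous_coord.
have hne : exists z, half_ball_gap z <= 0.
  by exists (vpair a b); apply/half_ball_gap_le0; rewrite vpairK1 vpairK2; case: axis_half_ball_pair.
have [z [/half_ball_gap_le0 hz hmin]] := Compactness.sublevel_min_attained cF sup_continuous_half_ball_gap
  hne (ex_intro _ _ half_ball_gap_bounded).
exists (vfst z), (vsnd z); split => // x' y' hxy.
have := hmin (vpair x' y'); rewrite vpairK1 vpairK2; apply.
by apply/half_ball_gap_le0; rewrite vpairK1 vpairK2.
Qed.

(* Two sublevel points on opposite sides at distance below [2 s1] are close to
   the hyperplane, hence (by the cone estimate) close to [xbar]. *)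
Lemma near_pair_half_ball x y : S x -> S y -> 0 < sc x -> sc y < 0 ->
  dot (vsub x y) (vsub x y) < 4 * (s1 * s1) -> half_ball_pair x y.
Proof.
move=> Sx Sy hx hy hD.
have hcs : (sc x - sc y) * (sc x - sc y) <= dot (vsub x y) (vsub x y).
  have -> : sc x - sc y = dot (vsub x y) u.
    by rewrite /sc /ucoord -dot_subl; congr dot; apply: vext => i; rewrite /vsub; ring.
  by have := dot_cauchy_schwarz (vsub x y) u; rewrite (sd_unit D); lra.
have hx2 : sc x * sc x <= 4 * (s1 * s1) by nra.
have hy2 : sc y * sc y <= 4 * (s1 * s1) by nra.
have nx := sqdist_decomp D x.
have ny := sqdist_decomp D' y.
have wx := sublevel_cone D Sc Sx (Rlt_le _ _ hx).
have wy := sublevel_cone D' Sc Sy ltac:(rewrite ucoord_opp; lra).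
rewrite ucoord_opp in ny wy.
have hK := ss_cone Sc; have hK1 := cone_slope_ge1 (sd_lam D) (sd_mu D).
case: Sx => fx _; case: Sy => fy _.
rewrite -/sc in nx wx; rewrite /half_ball_pair.
split; first by split.
split; first by split; lra.
split; [rewrite nx | rewrite ny]; nra.
Qed.

Lemma sublevel_closest_points : exists xt yt, S xt /\ S yt /\ ~ path_in S xt yt /\
  set_distance (path_component S xt) (path_component S yt) (vdist xt yt).
Proof.
have [xt [yt [hxy hmin]]] := closest_half_ball_pair.
have [[fx fy] [[sx sy] [bx by']]] := hxy.
have hth := ss_th Sc.
have in_ball v : dot (vsub v xbar) (vsub v xbar) <= th * th / 4 -> open_ball xbar th v.
  by move=> hv; rewrite /open_ball /vdist; apply/vnorm_lt => //; nra.
have Sxt : S xt by split => //; apply: in_ball.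
have Syt : S yt by split => //; apply: in_ball.
have sxt : 0 < sc xt.
  by case: (Rle_lt_or_eq_dec _ _ sx) => // e; case: (sublevel_ucoord_neq0 D Sc Sxt).
have syt : sc yt < 0.
  by case: (Rle_lt_or_eq_dec _ _ sy) => // e; case: (sublevel_ucoord_neq0 D Sc Syt).
exists xt, yt; do 2!split => //; split.
  by move=> hp; have := sublevel_path_same_side D Sc hp sxt; rewrite -/sc; lra.
split; last by move=> d' hd'; apply: hd'; split => //; exact: path_refl.
move=> x y [_ hx] [_ hy]; have [_ Sx] := path_ends hx; have [_ Sy] := path_ends hy.
have hsx : 0 < sc x := sublevel_path_same_side D Sc hx sxt.
have hsy : sc y < 0 := path_neg hy syt.
rewrite /vdist /vnorm; apply: sqrt_le_1_alt.
have [hab dab] := axis_half_ball_pair.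
case: (Rle_lt_dec (4 * (s1 * s1)) (dot (vsub x y) (vsub x y))) => hfar.
  by apply: Rle_trans (hmin _ _ hab) _; lra.
exact/hmin/near_pair_half_ball.
Qed.

End SaddleSublevel.

Lemma saddle_data_exists n (f : vec n -> R) grad hess xbar c :
  C2_with f grad hess -> grad xbar = vzero -> invertible (hess xbar) ->
  morse_index (hess xbar) 1 -> f xbar = c ->
  exists u lam mu eta th0, saddle_data f grad hess xbar c u lam mu eta th0.
Proof.
move=> HC2 Hg0 Hinv [Hm1 Hm2] Hfc.
have Hsym := hess_symmetric HC2 xbar.
have [u [lam [Hu1 [Hu Hlam]]]] := unit_neg_eigenvector Hm1.
have [mu [Hmu Hpd]] := posdef_on_orthogonal Hsym Hu1 Hu Hlam Hinv Hm2.
set eta := Rmin (- lam / 2) (mu / 8) / (INR n + 1).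
have hN := pos_INR n.
have hmin : 0 < Rmin (- lam / 2) (mu / 8) by apply: Rmin_pos; lra.
have Heta : 0 < eta by apply: Rdiv_lt_0_compat; lra.
have HeN : eta * INR n <= Rmin (- lam / 2) (mu / 8).
  have : eta * (INR n + 1) = Rmin (- lam / 2) (mu / 8) by rewrite /eta; field; lra.
  nra.
have [th0 [Hth0 Hball]] := proj2 (proj2 HC2) xbar eta Heta.
exists u, lam, mu, eta, th0; constructor => //.
- exact: Rle_trans HeN (Rmin_l _ _).
- exact: Rle_trans HeN (Rmin_r _ _).
Qed.

(* [s1] solves [lam s1^2 / 4 = - ep]; the cone condition then bounds [ep]. *)
Lemma sublevel_scale_exists lam mu th0 th : lam < 0 -> 0 < mu -> 0 < th <= th0 ->
  exists eps0, 0 < eps0 /\ forall ep, 0 < ep < eps0 -> exists s1, sublevel_scale lam mu th0 th ep s1.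
Proof.
move=> hlam hmu hth.
have hK := cone_slope_ge1 hlam hmu; set K := cone_slope lam mu in hK *.
exists (- lam * (th * th) / (64 * (1 + K))); split.
  by apply: Rdiv_lt_0_compat; [apply: Rmult_lt_0_compat; nra | lra].
move=> ep [hep hep0].
have h4 : 0 < 4 * ep / - lam by apply: Rdiv_lt_0_compat; lra.
have hs1 : sqrt (4 * ep / - lam) * sqrt (4 * ep / - lam) = 4 * ep / - lam by apply: sqrt_sqrt; lra.
exists (sqrt (4 * ep / - lam)); constructor => //; try lra.
- exact: sqrt_lt_R0.
- by rewrite hs1; right; field; lra.
- rewrite hs1.
  have := Rmult_lt_compat_l (64 * (1 + K) / - lam) _ _ ltac:(apply: Rdiv_lt_0_compat; lra) hep0.
  have -> : 64 * (1 + K) / - lam * (- lam * (th * th) / (64 * (1 + K))) = th * th by field; lra.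
  by have -> : 16 * (1 + K) * (4 * ep / - lam) = 64 * (1 + K) / - lam * ep by field; lra.
Qed.

Theorem proposition4p1 (n : nat) (f : vec n -> R) (grad : vec n -> vec n)
    (hess : vec n -> mat n) (xbar : vec n) (c : R) :
  C2_with f grad hess ->
  grad xbar = vzero ->
  invertible (hess xbar) ->
  morse_index (hess xbar) 1 ->
  f xbar = c ->
  exists theta0, 0 < theta0 /\
    forall theta, 0 < theta < theta0 ->
      exists eps0, 0 < eps0 /\
        forall eps, 0 < eps < eps0 ->
          let S := fun x => f x <= c - eps /\ open_ball xbar theta x in
          exactly_two_path_components S /\
          exists xt yt, S xt /\ S yt /\ ~ path_in S xt yt /\
            set_distance (path_component S xt) (path_component S yt) (vdist xt yt).
Proof.
move=> HC2 Hg0 Hinv Hmorse Hfc.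
have [u [lam [mu [eta [th0 D]]]]] := saddle_data_exists HC2 Hg0 Hinv Hmorse Hfc.
exists th0; split; first exact: sd_th0 D.
move=> th hth.
have [eps0 [heps0 Hscale]] := @sublevel_scale_exists lam mu th0 th (sd_lam D) (sd_mu D) ltac:(lra).
exists eps0; split => // ep hep.
have [s1 Sc] := Hscale ep hep.
by split; [exact (sublevel_exactly_two_components D Sc) | exact (sublevel_closest_points D Sc)].
Qed.
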